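(* Let $f\in C^1[0,1]$ with $f(0)=0$, $h:=f'$, and $q$ satisfying (q). Assume that $\lim_{\varphi\to0^+}q(\varphi)/\varphi$ exists in $[0,\infty)$, that $\int_0^{\delta} q(\sigma)/\sigma^2\,d\sigma<+\infty$ for some $\delta\in(0,1)$, and that $c^*>h(0)$. Then problem $(P_{c^*})$ admits a unique solution $z$, and it satisfies $z(1)=0$ (i.e., $z=z^*$).
   Context: Condition (q): $q\in C[0,1]$, $q>0$ on $(0,1)$, $q(0)=q(1)=0$, and $\limsup_{\varphi\to0^+}q(\varphi)/\varphi<+\infty$. For $c\in\mathbb R$, a solution of problem $(P_c)$ is a function $z\in C[0,1]\cap C^1(0,1)$ with $\dot z(\varphi)=h(\varphi)-c-q(\varphi)/z(\varphi)$ and $z(\varphi)<0$ for all $\varphi\in(0,1)$, and $z(0)=0$. A solution of $(P^{00}_c)$ is a solution of $(P_c)$ which also satisfies $z(1)=0$. $c^*$ denotes the real number such that $(P^{00}_c)$ has a solution iff $c\ge c^*$ (that solution, denoted $z^*$ when $c=c^*$, being unique). *)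

From Stdlib Require Import Reals.
From Coquelicot Require Import Coquelicot.
Open Scope R_scope.

Definition in01 (x : R) : Prop := 0 <= x <= 1.
Definition in01o (x : R) : Prop := 0 < x < 1.

Definition cont01 (g : R -> R) : Prop :=
  forall x, in01 x -> filterlim g (within in01 (locally x)) (locally (g x)).

Definition C1_01_with_deriv (f h : R -> R) : Prop :=
  cont01 f /\ cont01 h /\
  forall x, in01 x ->
    filterlim (fun y => (f y - f x) / (y - x))
      (within (fun y => in01 y /\ y <> x) (locally x)) (locally (h x)).

(* Condition (q). limsup_{φ→0+} q(φ)/φ < +∞ is unfolded as:
   q(φ)/φ is bounded above on some right neighbourhood of 0. *)
Definition cond_q (q : R -> R) : Prop :=
  cont01 q /\ (forall x, in01o x -> 0 < q x) /\ q 0 = 0 /\ q 1 = 0 /\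
  exists M eps, 0 < eps /\ forall x, 0 < x < eps -> q x / x <= M.

Definition sol_P (h q : R -> R) (c : R) (z : R -> R) : Prop :=
  cont01 z /\
  (forall x, in01o x -> is_derive z x (h x - c - q x / z x)) /\
  (forall x, in01o x -> z x < 0) /\
  z 0 = 0.

Definition sol_P00 (h q : R -> R) (c : R) (z : R -> R) : Prop :=
  sol_P h q c z /\ z 1 = 0.

(* The proof has three steps.
   (1) Integrability of q/σ² forces lim q(φ)/φ = 0 (a positive limit l would
       give q/σ² >= (l/2)/σ near 0).  Hence, with k := (c* - h(0))/4, the line
       φ |-> -kφ is a strict upper barrier for z' = h - c - q/z near 0,
       uniformly for c close to c*.
   (2) z* is "fast" at 0: z*(φ) <= -kφ near 0.  Otherwise z*(x0) > -k x0 for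
       some small x0, and a shooting argument from x0 produces a solution of
       (P^00_c) for some c < c*, contradicting the minimality of c*.  For this
       we need existence, uniqueness and continuous dependence for the
       equation; they come from a Picard iteration for a truncated, globally
       Lipschitz version of the equation and from Gronwall estimates.
   (3) The difference of two solutions of the same equation solves the linear
       equation (z - w)' = q/(z w) (z - w), so its sign is constant.  Since
       z*(1) = 0, no solution lies above z*; since z* <= -kφ and q/σ² is
       integrable, a solution below z* would stay away from z* near 0, which
       is impossible because both vanish at 0. *)

From Stdlib Require Import Reals Lra Lia Classical ClassicalEpsilon.
From Coquelicot Require Import Coquelicot.
Open Scope R_scope.

Lemma ball_R (x y e : R) : ball x e y <-> Rabs (y - x) < e.
Proof. unfold ball; simpl; unfold AbsRing_ball, minus, plus, opp, abs; simpl. tauto. Qed.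

Lemma locally_interval al be t : al < t < be -> locally t (fun u => al < u < be).
Proof.
  intros Ht. exists (mkposreal (Rmin (t - al) (be - t)) ltac:(apply Rmin_glb_lt; lra)).
  intros u Hu.
  assert (Hd : Rabs (u - t) < Rmin (t - al) (be - t)) by (apply ball_R; exact Hu). apply Rabs_def2 in Hd.
  assert (Rmin (t - al) (be - t) <= t - al) by apply Rmin_l.
  assert (Rmin (t - al) (be - t) <= be - t) by apply Rmin_r. lra.
Qed.

Lemma continuous_ed (f : R -> R) x eps : continuous f x -> 0 < eps ->
  exists d, 0 < d /\ forall y, Rabs (y - x) < d -> Rabs (f y - f x) < eps.
Proof.
  intros Hc He. destruct (proj1 (filterlim_locally _ _) Hc (mkposreal eps He)) as [d Hd].
  exists d. split; [apply cond_pos|]. intros y Hy. apply ball_R, Hd, ball_R, Hy.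
Qed.

Lemma within01_ed (g : R -> R) x eps :
  filterlim g (within in01 (locally x)) (locally (g x)) -> 0 < eps ->
  exists d, 0 < d /\ forall y, in01 y -> Rabs (y - x) < d -> Rabs (g y - g x) < eps.
Proof.
  intros Hg He. destruct (proj1 (filterlim_locally _ _) Hg (mkposreal eps He)) as [d Hd].
  exists d. split; [apply cond_pos|]. intros y Hy Hyx. apply ball_R, Hd; [apply ball_R|]; assumption.
Qed.

Lemma cont01_ed (g : R -> R) x eps : cont01 g -> in01 x -> 0 < eps ->
  exists d, 0 < d /\ forall y, in01 y -> Rabs (y - x) < d -> Rabs (g y - g x) < eps.
Proof. intros Hg Hx. apply within01_ed, Hg, Hx. Qed.

Lemma continuous_of_derive (f : R -> R) t l : is_derive f t l -> continuous f t.
Proof. intros H. apply (ex_derive_continuous f t). exists l; exact H. Qed.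

Lemma nondecreasing_of_derive (f df : R -> R) a b : a <= b ->
  (forall t, a <= t <= b -> is_derive f t (df t)) ->
  (forall t, a <= t <= b -> 0 <= df t) -> f a <= f b.
Proof.
  intros Hab Hd Hp.
  destruct (MVT_gen f a b df) as [c [Hc Heq]];
    rewrite ?Rmin_left, ?Rmax_right in * by lra.
  - intros x Hx. apply Hd; lra.
  - intros x Hx. apply continuity_pt_filterlim, (continuous_of_derive f x (df x)), Hd; lra.
  - assert (0 <= df c * (b - a)) by (apply Rmult_le_pos; [apply Hp; lra| lra]). lra.
Qed.

Lemma exp_le x y : x <= y -> exp x <= exp y.
Proof. intros [H|H]; [left; apply exp_increasing, H| subst; lra]. Qed.

Lemma exp_ge1 x : 0 <= x -> 1 <= exp x.
Proof. intros H. rewrite <- exp_0. apply exp_le, H. Qed.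

Lemma neg_bounded_away (Z : R -> R) a b : a <= b -> (forall t, a <= t <= b -> continuous Z t) ->
  (forall t, a <= t <= b -> Z t < 0) -> exists be, 0 < be /\ forall t, a <= t <= b -> Z t <= - be.
Proof.
  intros Hab Hc Hn.
  destruct (continuity_ab_maj Z a b Hab) as [M [HM HMab]].
  { intros t Ht. apply continuity_pt_filterlim, Hc, Ht. }
  exists (- Z M). split; [specialize (Hn M HMab); lra|]. intros t Ht. specialize (HM t Ht). lra.
Qed.

Lemma first_zero (D : R -> R) a b : a < b ->
  (forall t, a <= t <= b -> continuous D t) -> D a > 0 -> D b <= 0 ->
  exists T, a < T <= b /\ D T = 0 /\ forall t, a <= t < T -> D t > 0.
Proof.
  intros Hab Hc Ha Hb.
  set (E := fun T => a <= T <= b /\ forall t, a <= t <= T -> D t > 0).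
  assert (Ea : E a) by (split; [lra|]; intros t Ht; replace t with a by lra; lra).
  destruct (completeness E) as [T [HTub HTlub]]; [exists b; intros x [Hx _]; lra| exists a; exact Ea|].
  assert (HaT : a <= T) by (apply HTub, Ea).
  assert (HTb : T <= b) by (apply HTlub; intros x [Hx _]; lra).
  assert (Hbefore : forall t, a <= t < T -> D t > 0).
  { intros t Ht. apply NNPP; intro Hn. enough (T <= t) by lra.
    apply HTlub. intros x [_ Hx]. apply Rnot_lt_le; intro Hxt. apply Hn, Hx. lra. }
  assert (HcT := Hc T (conj HaT HTb)).
  destruct (Rtotal_order (D T) 0) as [Hneg|[Hzero|Hpos]].
  - exfalso. destruct (continuous_ed D T (- D T) HcT ltac:(lra)) as [d [Hd HdD]].
    assert (HaT' : a < T) by (destruct HaT as [|E']; [lra| subst; lra]).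
    set (t := Rmax a (T - d / 2)).
    assert (Ht : a <= t < T) by (unfold t; split; [apply Rmax_l| apply Rmax_lub_lt; lra]).
    assert (Ht' : T - d / 2 <= t) by apply Rmax_r.
    specialize (HdD t ltac:(apply Rabs_def1; lra)). apply Rabs_def2 in HdD.
    specialize (Hbefore t Ht). lra.
  - exists T. split; [|split; assumption]. destruct HaT as [|E']; [lra| subst; lra].
  - exfalso. destruct (continuous_ed D T (D T) HcT Hpos) as [d [Hd HdD]].
    assert (HTb' : T < b) by (destruct HTb as [|E']; [lra| subst; lra]).
    set (T' := Rmin b (T + d / 2)).
    assert (HT' : T < T' <= T + d / 2) by (unfold T'; split; [apply Rmin_glb_lt| apply Rmin_r]; lra).
    enough (ET' : E T') by (specialize (HTub T' ET'); lra).
    split; [split; [lra| apply Rmin_l]|]. intros t Ht.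
    destruct (Rlt_or_le t T); [apply Hbefore; lra|].
    specialize (HdD t ltac:(apply Rabs_def1; lra)). apply Rabs_def2 in HdD. lra.
Qed.

(** * Linear differential inequalities *)

Lemma ex_RInt_open (g : R -> R) al be a u : al < a < be -> al < u < be ->
  (forall t, al < t < be -> continuous g t) -> ex_RInt g a u.
Proof.
  intros Ha Hu Hc. apply (@ex_RInt_continuous R_CompleteNormedModule). intros z Hz. apply Hc.
  split.
  - apply Rlt_le_trans with (Rmin a u); [apply Rmin_glb_lt; lra| lra].
  - apply Rle_lt_trans with (Rmax a u); [lra| apply Rmax_lub_lt; lra].
Qed.

Lemma derive_RInt_open (g : R -> R) al be a t : al < a < be -> al < t < be ->
  (forall t, al < t < be -> continuous g t) -> is_derive (fun u => RInt g a u) t (g t).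
Proof.
  intros Ha Ht Hc. apply (is_derive_RInt g (fun u => RInt g a u) a t).
  - generalize (locally_interval al be t Ht). apply filter_imp. intros u Hu.
    apply (@RInt_correct R_CompleteNormedModule). apply (ex_RInt_open g al be); auto.
  - apply Hc; auto.
Qed.

Lemma RInt_empty (g : R -> R) a : RInt g a a = 0.
Proof. rewrite RInt_point; reflexivity. Qed.

Section LinearInequality.
Variables (D g r : R -> R) (al be : R).
Hypothesis Hlin : forall t, al < t < be -> continuous g t /\ is_derive D t (g t * D t + r t).

Lemma integrating_factor_derive a t : al < a < be -> al < t < be ->
  is_derive (fun u => D u * exp (- RInt g a u)) t (r t * exp (- RInt g a t)).
Proof.
  intros Ha Ht. destruct (Hlin t Ht) as [_ HD].
  assert (HG := derive_RInt_open g al be a t Ha Ht (fun u Hu => proj1 (Hlin u Hu))).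
  assert (He : is_derive (fun u => exp (- RInt g a u)) t (- g t * exp (- RInt g a t))).
  { apply (is_derive_comp exp (fun u => - RInt g a u)); [apply is_derive_exp| apply (is_derive_opp _ _ _ HG)]. }
  replace (r t * exp (- RInt g a t)) with
    ((g t * D t + r t) * exp (- RInt g a t) + D t * (- g t * exp (- RInt g a t))) by ring.
  exact (is_derive_mult D _ t _ _ HD He Rmult_comm).
Qed.

Lemma linear_ineq_fwd a b : al < a -> b < be ->
  (forall t, a <= t <= b -> 0 <= r t) -> 0 <= D a -> forall t, a <= t <= b -> 0 <= D t.
Proof.
  intros Ha Hb Hr HDa t Ht.
  assert (H := nondecreasing_of_derive (fun u => D u * exp (- RInt g a u))
    (fun u => r u * exp (- RInt g a u)) a t ltac:(lra)
    (fun u Hu => integrating_factor_derive a u ltac:(lra) ltac:(lra))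
    (fun u Hu => Rmult_le_pos _ _ (Hr u ltac:(lra)) (Rlt_le _ _ (exp_pos _)))).
  cbv beta in H. rewrite RInt_empty, Ropp_0, exp_0, Rmult_1_r in H.
  assert (He := exp_pos (- RInt g a t)). nra.
Qed.

Lemma linear_ineq_bwd a b : al < a -> b < be ->
  (forall t, a <= t <= b -> r t <= 0) -> 0 <= D b -> forall t, a <= t <= b -> 0 <= D t.
Proof.
  intros Ha Hb Hr HDb t Ht.
  assert (H := nondecreasing_of_derive (fun u => - (D u * exp (- RInt g a u)))
    (fun u => - (r u * exp (- RInt g a u))) t b ltac:(lra)
    (fun u Hu => is_derive_opp _ _ _ (integrating_factor_derive a u ltac:(lra) ltac:(lra)))).
  assert (Hb' : D b * exp (- RInt g a b) <= D t * exp (- RInt g a t)).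
  { enough (- (D t * exp (- RInt g a t)) <= - (D b * exp (- RInt g a b))) by lra.
    apply H. intros u Hu. assert (Hr' := Hr u ltac:(lra)). assert (He := exp_pos (- RInt g a u)). nra. }
  assert (He := exp_pos (- RInt g a t)). assert (Hb2 := exp_pos (- RInt g a b)). nra.
Qed.

Lemma linear_eq_formula a b : al < a -> b < be ->
  (forall t, a <= t <= b -> r t = 0) -> forall t, a <= t <= b -> D t = D a * exp (RInt g a t).
Proof.
  intros Ha Hb Hr t Ht.
  set (F := fun u => D u * exp (- RInt g a u)).
  assert (HF : forall u, a <= u <= t -> is_derive F u 0).
  { intros u Hu. replace 0 with (r u * exp (- RInt g a u)) by (rewrite Hr by lra; ring).
    apply integrating_factor_derive; lra. }
  assert (H1 := nondecreasing_of_derive F (fun _ => 0) a t ltac:(lra) HF ltac:(intros; lra)).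
  assert (H2 := nondecreasing_of_derive (fun u => - F u) (fun _ => - 0) a t ltac:(lra)
    (fun u Hu => is_derive_opp _ _ _ (HF u Hu)) ltac:(intros; lra)).
  assert (E : F t = F a) by lra. unfold F in E.
  rewrite RInt_empty, Ropp_0, exp_0, Rmult_1_r in E. rewrite <- E, Rmult_assoc, <- exp_plus.
  replace (- RInt g a t + RInt g a t) with 0 by ring. rewrite exp_0; ring.
Qed.

End LinearInequality.

(** * Gronwall's lemma *)

Lemma product_bound d e L eps : 0 <= L -> 0 <= eps -> Rabs e <= L * Rabs d + eps ->
  2 * d * e <= (2 * L + 1) * (d ^ 2 + eps ^ 2).
Proof.
  intros HL He H.
  assert (2 * d * e <= 2 * Rabs d * Rabs e).
  { rewrite !Rmult_assoc. apply Rmult_le_compat_l; [lra|]. rewrite <- Rabs_mult. apply Rle_abs. }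
  assert (Rabs d * Rabs e <= Rabs d * (L * Rabs d + eps)) by (apply Rmult_le_compat_l; [apply Rabs_pos| exact H]).
  assert (Rabs d * Rabs d = d * d) by (rewrite <- Rabs_mult; apply Rabs_right; nra).
  assert (0 <= (Rabs d - eps) ^ 2) by apply pow2_ge_0.
  assert (0 <= L * eps ^ 2) by nra.
  nra.
Qed.

(* Derivative of ((y1 - y2)² + s) e^{k t}, the Lyapunov function of Gronwall's lemma. *)
Lemma derive_weighted_sq_gap (y1 y2 f1 f2 : R -> R) t k s :
  is_derive y1 t (f1 t) -> is_derive y2 t (f2 t) ->
  is_derive (fun u => ((y1 u - y2 u) ^ 2 + s) * exp (k * u)) t
   ((2 * (y1 t - y2 t) * (f1 t - f2 t)) * exp (k * t) + ((y1 t - y2 t) ^ 2 + s) * (k * exp (k * t))).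
Proof.
  intros H1 H2. auto_derive.
  - split; [eexists; exact H1| split; [eexists; exact H2| auto]].
  - change (Derive (fun x => y1 x) t) with (Derive y1 t).
    change (Derive (fun x => y2 x) t) with (Derive y2 t).
    rewrite (is_derive_unique _ _ _ H1), (is_derive_unique _ _ _ H2). ring.
Qed.

Lemma gronwall_fwd (y1 y2 f1 f2 : R -> R) L eps a b :
  0 <= L -> 0 <= eps ->
  (forall t, a <= t <= b -> is_derive y1 t (f1 t) /\ is_derive y2 t (f2 t)) ->
  (forall t, a <= t <= b -> Rabs (f1 t - f2 t) <= L * Rabs (y1 t - y2 t) + eps) ->
  forall t, a <= t <= b ->
  (y1 t - y2 t) ^ 2 <= ((y1 a - y2 a) ^ 2 + eps ^ 2) * exp ((2 * L + 1) * (t - a)).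
Proof.
  intros HL He Hd Hb t Ht.
  set (k := - (2 * L + 1)).
  set (F := fun u => ((y1 u - y2 u) ^ 2 + eps ^ 2) * exp (k * u)).
  assert (HF : F t <= F a).
  { enough (- F a <= - F t) by lra.
    apply (nondecreasing_of_derive (fun u => - F u) (fun u =>
      - ((2 * (y1 u - y2 u) * (f1 u - f2 u)) * exp (k * u) + ((y1 u - y2 u) ^ 2 + eps ^ 2) * (k * exp (k * u)))));
      [lra| |].
    - intros u Hu. destruct (Hd u ltac:(lra)). apply (is_derive_opp F).
      apply derive_weighted_sq_gap; assumption.
    - intros u Hu. assert (Hk := product_bound _ _ L eps HL He (Hb u ltac:(lra))).
      assert (HE : 0 < exp (k * u)) by apply exp_pos.
      apply Rle_trans with (((2 * L + 1) * ((y1 u - y2 u) ^ 2 + eps ^ 2)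
        - 2 * (y1 u - y2 u) * (f1 u - f2 u)) * exp (k * u)); [apply Rmult_le_pos; lra| right; unfold k; ring]. }
  unfold F in HF.
  assert (Hexp : exp ((2 * L + 1) * (t - a)) = exp (k * a) * exp (- (k * t)))
    by (rewrite <- exp_plus; f_equal; unfold k; ring).
  assert (Hinv : exp (k * t) * exp (- (k * t)) = 1) by (rewrite <- exp_plus, Rplus_opp_r, exp_0; reflexivity).
  assert (0 < exp (- (k * t))) by apply exp_pos. assert (0 <= eps ^ 2) by apply pow2_ge_0.
  rewrite Hexp, <- Rmult_assoc.
  apply Rle_trans with ((y1 t - y2 t) ^ 2 + eps ^ 2); [lra|].
  replace ((y1 t - y2 t) ^ 2 + eps ^ 2)
    with (((y1 t - y2 t) ^ 2 + eps ^ 2) * exp (k * t) * exp (- (k * t))) by (rewrite Rmult_assoc, Hinv; ring).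
  apply Rmult_le_compat_r; [lra| exact HF].
Qed.

(* Gronwall backward in time, by reflection t |-> -t. *)
Lemma gronwall_bwd (y1 y2 f1 f2 : R -> R) L eps a b :
  0 <= L -> 0 <= eps ->
  (forall t, a <= t <= b -> is_derive y1 t (f1 t) /\ is_derive y2 t (f2 t)) ->
  (forall t, a <= t <= b -> Rabs (f1 t - f2 t) <= L * Rabs (y1 t - y2 t) + eps) ->
  forall t, a <= t <= b ->
  (y1 t - y2 t) ^ 2 <= ((y1 b - y2 b) ^ 2 + eps ^ 2) * exp ((2 * L + 1) * (b - t)).
Proof.
  intros HL He Hd Hb t Ht.
  assert (Hrefl : forall (y f : R -> R) u, is_derive y (- u) (f (- u)) ->
            is_derive (fun v => y (- v)) u (- f (- u))).
  { intros y f u H. assert (Hn : is_derive (fun v : R => - v) u (-1)) by (auto_derive; auto; ring).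
    assert (Hc := is_derive_comp y (fun v => - v) u _ _ H Hn).
    replace (- f (- u)) with (-1 * f (- u)) by ring. exact Hc. }
  assert (H := gronwall_fwd (fun u => y1 (- u)) (fun u => y2 (- u)) (fun u => - f1 (- u))
    (fun u => - f2 (- u)) L eps (- b) (- a) HL He).
  specialize (H ltac:(intros u Hu; cbv beta; destruct (Hd (- u) ltac:(lra)); split; apply Hrefl; assumption)).
  specialize (H ltac:(intros u Hu; cbv beta; replace (- f1 (- u) - - f2 (- u)) with (- (f1 (- u) - f2 (- u))) by ring;
    rewrite Rabs_Ropp; apply Hb; lra) (- t) ltac:(lra)).
  cbv beta in H. rewrite !Ropp_involutive in H. replace (- t - - b) with (b - t) in H by ring. exact H.
Qed.

(** * Picard iteration *)

Lemma lip_continuous (f : R -> R) K t : 0 < K -> (forall x y, Rabs (f x - f y) <= K * Rabs (x - y)) ->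
  continuous f t.
Proof.
  intros HK Hl. apply filterlim_locally. intros eps.
  exists (mkposreal (eps / K) ltac:(apply Rdiv_lt_0_compat; [apply cond_pos| lra])).
  intros y Hy. assert (Hy' : Rabs (y - t) < eps / K) by (apply ball_R; exact Hy).
  apply ball_R. apply Rle_lt_trans with (K * Rabs (y - t)); [apply Hl|].
  apply Rmult_lt_compat_l with (r := K) in Hy'; [|lra].
  replace (K * (eps / K)) with (pos eps) in Hy' by (field; lra). exact Hy'.
Qed.

(* Projection of R onto [-1, 2]; iterates are computed on this interval,
   which contains [0, 1] in its interior. *)
Definition clip (t : R) := Rmax (-1) (Rmin 2 t).

Lemma clip_lip x y : Rabs (clip x - clip y) <= Rabs (x - y).
Proof. unfold clip, Rmax, Rmin. repeat destruct Rle_dec; unfold Rabs; repeat destruct Rcase_abs; lra. Qed.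

Lemma clip_range t : -1 <= clip t <= 2.
Proof. unfold clip, Rmax, Rmin. repeat destruct Rle_dec; lra. Qed.

Lemma clip_id t : -1 <= t <= 2 -> clip t = t.
Proof. intros H. unfold clip, Rmax, Rmin. repeat destruct Rle_dec; lra. Qed.

Lemma RInt_bound_const (f : R -> R) a b M : ex_RInt f a b ->
  (forall u, Rmin a b <= u <= Rmax a b -> Rabs (f u) <= M) -> Rabs (RInt f a b) <= M * Rabs (b - a).
Proof.
  intros Hex Hb. destruct (Rle_or_lt a b) as [Hab|Hab].
  - rewrite Rmin_left, Rmax_right in Hb by lra. rewrite (Rabs_right (b - a)) by lra.
    rewrite Rmult_comm. apply abs_RInt_le_const; [lra| exact Hex| exact Hb].
  - rewrite Rmin_right, Rmax_left in Hb by lra.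
    rewrite <- (@opp_RInt_swap R_CompleteNormedModule f b a (ex_RInt_swap _ _ _ Hex)).
    change (opp (RInt f b a)) with (- RInt f b a).
    rewrite Rabs_Ropp, (Rabs_left (b - a)) by lra. replace (- (b - a)) with (a - b) by ring.
    rewrite Rmult_comm. apply abs_RInt_le_const; [lra| apply ex_RInt_swap; exact Hex| exact Hb].
Qed.

Lemma RInt_bound_deriv (f Psi psi : R -> R) a b : a <= b -> ex_RInt f a b ->
  (forall u, a <= u <= b -> is_derive Psi u (psi u) /\ continuous psi u) ->
  (forall u, a <= u <= b -> Rabs (f u) <= psi u) ->
  Rabs (RInt f a b) <= Psi b - Psi a.
Proof.
  intros Hab Hex Hd Hb.
  assert (Hip : is_RInt psi a b (Psi b - Psi a)).
  { apply (@is_RInt_derive R_CompleteNormedModule Psi psi a b);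
      intros x Hx; rewrite Rmin_left, Rmax_right in Hx by lra; apply Hd; lra. }
  assert (Hexp : ex_RInt psi a b) by (eexists; exact Hip).
  assert (HR : RInt psi a b = Psi b - Psi a) by (apply is_RInt_unique; exact Hip).
  assert (H1 : 0 <= RInt (fun u => psi u - f u) a b).
  { apply RInt_ge_0; [exact Hab| apply (ex_RInt_minus psi f); assumption|]. intros x Hx.
    specialize (Hb x ltac:(lra)). apply Rabs_le_between in Hb. lra. }
  assert (H2 : 0 <= RInt (fun u => psi u + f u) a b).
  { apply RInt_ge_0; [exact Hab| apply (ex_RInt_plus psi f); assumption|]. intros x Hx.
    specialize (Hb x ltac:(lra)). apply Rabs_le_between in Hb. lra. }
  assert (E1 : RInt (fun u => psi u - f u) a b = RInt psi a b - RInt f a b)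
    by (apply (@RInt_minus R_CompleteNormedModule psi f a b Hexp Hex)).
  assert (E2 : RInt (fun u => psi u + f u) a b = RInt psi a b + RInt f a b)
    by (apply (@RInt_plus R_CompleteNormedModule psi f a b Hexp Hex)).
  rewrite E1, HR in H1. rewrite E2, HR in H2.
  apply Rabs_le. lra.
Qed.

Lemma RInt_exp_bound (f : R -> R) x0 b L m : 0 < L -> 0 <= m -> ex_RInt f x0 b ->
  (forall u, Rmin x0 b <= u <= Rmax x0 b -> Rabs (f u) <= L * m * exp (2 * L * Rabs (u - x0))) ->
  Rabs (RInt f x0 b) <= m / 2 * exp (2 * L * Rabs (b - x0)).
Proof.
  intros HL Hm Hex Hb. destruct (Rle_or_lt x0 b) as [Hab|Hab].
  - rewrite Rmin_left, Rmax_right in Hb by lra. rewrite (Rabs_right (b - x0)) by lra.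
    apply Rle_trans with (m / 2 * exp (2 * L * b + - 2 * L * x0) - m / 2 * exp (2 * L * x0 + - 2 * L * x0)).
    + apply (RInt_bound_deriv f (fun u => m / 2 * exp (2 * L * u + - 2 * L * x0)) (fun u => m / 2 * (2 * L * exp (2 * L * u + - 2 * L * x0))) x0 b Hab Hex).
      * intros u Hu. split; [auto_derive; auto; ring|].
        apply (ex_derive_continuous (fun u => m / 2 * (2 * L * exp (2 * L * u + - 2 * L * x0)))). auto_derive; auto.
      * intros u Hu. specialize (Hb u Hu). rewrite (Rabs_right (u - x0)) in Hb by lra.
        replace (2 * L * u + - 2 * L * x0) with (2 * L * (u - x0)) by ring. lra.
    + replace (2 * L * b + - 2 * L * x0) with (2 * L * (b - x0)) by ring.
      assert (0 < exp (2 * L * x0 + - 2 * L * x0)) by apply exp_pos. nra.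
  - rewrite Rmin_right, Rmax_left in Hb by lra.
    rewrite <- (@opp_RInt_swap R_CompleteNormedModule f b x0 (ex_RInt_swap _ _ _ Hex)).
    change (opp (RInt f b x0)) with (- RInt f b x0). rewrite Rabs_Ropp, (Rabs_left (b - x0)) by lra.
    apply Rle_trans with (- (m / 2) * exp (- 2 * L * x0 + 2 * L * x0) - - (m / 2) * exp (- 2 * L * b + 2 * L * x0)).
    + apply (RInt_bound_deriv f (fun u => - (m / 2) * exp (- 2 * L * u + 2 * L * x0))
        (fun u => - (m / 2) * (- 2 * L * exp (- 2 * L * u + 2 * L * x0))) b x0
        ltac:(lra) (ex_RInt_swap _ _ _ Hex)).
      * intros u Hu. split; [auto_derive; auto; ring|].
        apply (ex_derive_continuous (fun u => - (m / 2) * (- 2 * L * exp (- 2 * L * u + 2 * L * x0)))). auto_derive; auto.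
      * intros u Hu. specialize (Hb u Hu). rewrite (Rabs_left1 (u - x0)) in Hb by lra.
        replace (- 2 * L * u + 2 * L * x0) with (2 * L * - (u - x0)) by ring. lra.
    + replace (- 2 * L * b + 2 * L * x0) with (2 * L * - (b - x0)) by ring.
      assert (0 < exp (- 2 * L * x0 + 2 * L * x0)) by apply exp_pos. nra.
Qed.

Lemma RInt_cont_upper (f : R -> R) a : (forall t, continuous f t) -> forall b, continuous (fun b => RInt f a b) b.
Proof.
  intros Hf b. apply (ex_derive_continuous (fun b => RInt f a b)). exists (f b).
  apply (is_derive_RInt f (fun b => RInt f a b) a b); [|apply Hf].
  apply filter_forall. intros u. apply (@RInt_correct R_CompleteNormedModule).
  apply (@ex_RInt_continuous R_CompleteNormedModule). intros; apply Hf.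
Qed.

Lemma geom_small K eps : 0 < eps -> exists N, forall n, (N <= n)%nat -> K / 2 ^ n < eps.
Proof.
  intros He. destruct (INR_archimed eps (Rabs K) He) as [N HN].
  exists N. intros n Hn.
  assert (INR N <= INR n) by (apply le_INR; lia).
  assert (H2 : INR n <= 2 ^ n).
  { clear. induction n; [simpl; lra|]. rewrite S_INR. simpl.
    assert (1 <= 2 ^ n) by (apply pow_R1_Rle; lra). lra. }
  assert (0 < 2 ^ n) by (apply pow_lt; lra).
  apply Rmult_lt_reg_r with (2 ^ n); auto. unfold Rdiv. rewrite Rmult_assoc, Rinv_l by lra.
  assert (K <= Rabs K) by apply Rle_abs. nra.
Qed.

Section Picard.
Variables (G : R -> R -> R) (L B x0 s : R).
Hypothesis HL : 0 < L.
Hypothesis HB : 0 <= B.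
Hypothesis Hlip : forall t y1 y2, Rabs (G t y1 - G t y2) <= L * Rabs (y1 - y2).
Hypothesis Hbd : forall t y, Rabs (G t y) <= B.
Hypothesis Hcont : forall y : R -> R, (forall t, continuous y t) -> forall t, continuous (fun u => G u (y u)) t.
Hypothesis Hx0 : -1 <= x0 <= 2.

Fixpoint picard (n : nat) : R -> R :=
  match n with
  | O => fun _ => s
  | S m => fun t => s + RInt (fun u => G u (picard m u)) x0 (clip t)
  end.

Lemma picard_cont n t : continuous (picard n) t.
Proof.
  revert t; induction n; intros t; [apply continuous_const|].
  apply (continuous_plus (fun _ => s)); [apply continuous_const|].
  apply (continuous_comp clip (fun b => RInt (fun u => G u (picard n u)) x0 b)).
  - apply (lip_continuous clip 1); [lra| intros; rewrite Rmult_1_l; apply clip_lip].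
  - apply RInt_cont_upper, Hcont, IHn.
Qed.

Lemma picard_ex n b : ex_RInt (fun u => G u (picard n u)) x0 b.
Proof. apply (@ex_RInt_continuous R_CompleteNormedModule). intros; apply Hcont, picard_cont. Qed.

(* Contraction in the weighted norm sup |y t| e^{-2L|t - x0|}. *)
Lemma picard_step_weighted n t :
  Rabs (picard (S n) t - picard n t) <= 3 * B / 2 ^ n * exp (2 * L * Rabs (clip t - x0)).
Proof.
  assert (Hrange : forall t, Rabs (clip t - x0) <= 3)
    by (intros u; assert (H := clip_range u); apply Rabs_le; lra).
  revert t; induction n; intros t.
  - simpl picard. rewrite Rplus_minus_l.
    apply Rle_trans with (B * Rabs (clip t - x0)).
    + apply RInt_bound_const; [apply (picard_ex 0)| intros; apply Hbd].
    + assert (Ha := Rabs_pos (clip t - x0)).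
      assert (1 <= exp (2 * L * Rabs (clip t - x0))) by (apply exp_ge1; nra).
      specialize (Hrange t). simpl. nra.
  - change (picard (S (S n)) t - picard (S n) t) with
      (s + RInt (fun u => G u (picard (S n) u)) x0 (clip t) - (s + RInt (fun u => G u (picard n u)) x0 (clip t))).
    assert (Em : RInt (fun u => G u (picard (S n) u) - G u (picard n u)) x0 (clip t) =
      RInt (fun u => G u (picard (S n) u)) x0 (clip t) - RInt (fun u => G u (picard n u)) x0 (clip t))
      by apply (@RInt_minus R_CompleteNormedModule _ _ x0 (clip t) (picard_ex (S n) (clip t)) (picard_ex n (clip t))).
    rewrite Rminus_plus_l_l, <- Em.
    assert (Hm : 0 <= 3 * B / 2 ^ n) by (apply Rmult_le_pos; [lra| apply Rlt_le, Rinv_0_lt_compat, pow_lt; lra]).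
    apply Rle_trans with (3 * B / 2 ^ n / 2 * exp (2 * L * Rabs (clip t - x0))).
    + apply RInt_exp_bound; auto.
      * apply (ex_RInt_minus (fun u => G u (picard (S n) u)) (fun u => G u (picard n u))); apply picard_ex.
      * intros u Hu. apply Rle_trans with (L * Rabs (picard (S n) u - picard n u)); [apply Hlip|].
        rewrite Rmult_assoc. apply Rmult_le_compat_l; [lra|].
        assert (Hcu : clip u = u).
        { apply clip_id. assert (H := clip_range t).
          assert (Rmin x0 (clip t) >= -1) by (apply Rmin_case; lra).
          assert (Rmax x0 (clip t) <= 2) by (apply Rmax_case; lra). lra. }
        assert (HI := IHn u). rewrite Hcu in HI. exact HI.
    + right. simpl. field. apply pow_nonzero; lra.
Qed.

(* Bound for the weight exp(2 L |clip t - x0|) <= exp(6 L) times 3 B. *)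
Definition picard_const := 3 * B * exp (6 * L).

Lemma picard_step n t : Rabs (picard (S n) t - picard n t) <= picard_const / 2 ^ n.
Proof.
  apply Rle_trans with (1 := picard_step_weighted n t).
  unfold picard_const. assert (Hp : 0 < 2 ^ n) by (apply pow_lt; lra).
  assert (exp (2 * L * Rabs (clip t - x0)) <= exp (6 * L)).
  { apply exp_le. assert (H := clip_range t). assert (Rabs (clip t - x0) <= 3) by (apply Rabs_le; lra). nra. }
  assert (0 < / 2 ^ n) by (apply Rinv_0_lt_compat; lra).
  unfold Rdiv. replace (3 * B * exp (6 * L) * / 2 ^ n) with (3 * B * / 2 ^ n * exp (6 * L)) by ring.
  apply Rmult_le_compat_l; [apply Rmult_le_pos; lra| lra].
Qed.

Lemma picard_cauchy m n t : (n <= m)%nat -> Rabs (picard m t - picard n t) <= 2 * picard_const / 2 ^ n.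
Proof.
  intros H. replace m with (n + (m - n))%nat by lia. generalize (m - n)%nat as p. intros p.
  enough (Rabs (picard (n + p) t - picard n t) <= 2 * picard_const / 2 ^ n - 2 * picard_const / 2 ^ (n + p)).
  { assert (0 <= 2 * picard_const / 2 ^ (n + p)); [|lra].
    apply Rmult_le_pos; [unfold picard_const; assert (0 < exp (6 * L)) by apply exp_pos; nra|].
    apply Rlt_le, Rinv_0_lt_compat, pow_lt; lra. }
  induction p.
  - rewrite Nat.add_0_r, Rminus_diag, Rabs_R0. lra.
  - replace (n + S p)%nat with (S (n + p)) by lia.
    replace (picard (S (n + p)) t - picard n t)
      with ((picard (S (n + p)) t - picard (n + p) t) + (picard (n + p) t - picard n t)) by ring.
    apply Rle_trans with (1 := Rabs_triang _ _).
    assert (H1 := picard_step (n + p) t).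
    replace (2 * picard_const / 2 ^ S (n + p)) with (picard_const / 2 ^ (n + p)) by (simpl; field; apply pow_nonzero; lra).
    lra.
Qed.

Definition picard_lim t := real (Lim_seq (fun n => picard n t)).

Lemma picard_lim_spec t : is_lim_seq (fun n => picard n t) (picard_lim t).
Proof.
  assert (Hc : ex_finite_lim_seq (fun n => picard n t)).
  { apply ex_lim_seq_cauchy_corr. intros eps.
    destruct (geom_small (2 * picard_const) eps (cond_pos eps)) as [N HN].
    exists N. intros n m Hn Hm.
    destruct (Compare_dec.le_lt_dec n m) as [Hnm|Hnm].
    - rewrite Rabs_minus_sym. apply Rle_lt_trans with (1 := picard_cauchy m n t Hnm). apply HN; lia.
    - apply Rle_lt_trans with (1 := picard_cauchy n m t ltac:(lia)). apply HN; lia. }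
  destruct Hc as [l Hl]. unfold picard_lim. rewrite (is_lim_seq_unique _ _ Hl). exact Hl.
Qed.

Lemma picard_lim_bound n t : Rabs (picard n t - picard_lim t) <= 2 * picard_const / 2 ^ n.
Proof.
  apply Rnot_lt_le. intro Hc.
  set (d := Rabs (picard n t - picard_lim t) - 2 * picard_const / 2 ^ n).
  destruct (proj2 (is_lim_seq_spec _ _) (picard_lim_spec t) (mkposreal d ltac:(unfold d; lra))) as [N HN].
  specialize (HN (max N n) ltac:(lia)). simpl in HN.
  assert (H := picard_cauchy (max N n) n t ltac:(lia)).
  assert (Rabs (picard n t - picard_lim t)
    <= Rabs (picard (max N n) t - picard n t) + Rabs (picard (max N n) t - picard_lim t)).
  { replace (picard n t - picard_lim t)
      with (- (picard (max N n) t - picard n t) + (picard (max N n) t - picard_lim t)) by ring.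
    apply Rle_trans with (1 := Rabs_triang _ _). rewrite Rabs_Ropp. lra. }
  unfold d in HN. lra.
Qed.

Lemma picard_lim_fixpoint t : picard_lim t = s + RInt (fun u => G u (picard_lim u)) x0 (clip t) /\
  ex_RInt (fun u => G u (picard_lim u)) x0 (clip t).
Proof.
  set (g := fun u => G u (picard_lim u)).
  destruct (@filterlim_RInt nat R_CompleteNormedModule (fun n u => G u (picard n u)) x0 (clip t)
     eventually eventually_filter g (fun n => RInt (fun u => G u (picard n u)) x0 (clip t))) as [I [HI Hg]].
  - intros n. apply (@RInt_correct R_CompleteNormedModule), picard_ex.
  - intros P [eps HP].
    destruct (geom_small (L * (2 * picard_const)) eps (cond_pos eps)) as [N HN].
    exists N. intros n Hn. apply HP. intros u. apply ball_R. unfold g.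
    apply Rle_lt_trans with (L * Rabs (picard n u - picard_lim u)).
    + apply Hlip.
    + apply Rle_lt_trans with (L * (2 * picard_const / 2 ^ n)).
      * apply Rmult_le_compat_l; [lra| apply picard_lim_bound].
      * replace (L * (2 * picard_const / 2 ^ n)) with (L * (2 * picard_const) / 2 ^ n)
          by (field; apply pow_nonzero; lra).
        apply HN; exact Hn.
  - assert (HY : picard_lim t = s + I).
    { assert (H1 := proj1 (is_lim_seq_incr_1 _ _) (picard_lim_spec t)).
      assert (H2 : is_lim_seq (fun n => picard (S n) t) (s + I))
        by (apply is_lim_seq_plus'; [apply is_lim_seq_const| exact HI]).
      apply is_lim_seq_unique in H1, H2. rewrite H1 in H2. injection H2; auto. }
    split; [rewrite HY; f_equal; symmetry; apply is_RInt_unique; exact Hg| exists I; exact Hg].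
Qed.

Lemma picard_lim_lip t1 t2 : Rabs (picard_lim t1 - picard_lim t2) <= B * Rabs (t1 - t2).
Proof.
  destruct (picard_lim_fixpoint t1) as [E1 X1]. destruct (picard_lim_fixpoint t2) as [E2 X2].
  rewrite E1, E2, Rminus_plus_l_l.
  assert (Hch : ex_RInt (fun u => G u (picard_lim u)) (clip t2) (clip t1))
    by (apply ex_RInt_Chasles with x0; [apply ex_RInt_swap|]; assumption).
  assert (Ec := @RInt_Chasles R_CompleteNormedModule (fun u => G u (picard_lim u)) x0 (clip t2) (clip t1) X2 Hch).
  change (plus ?a ?b) with (a + b) in Ec.
  assert (E : RInt (fun u => G u (picard_lim u)) x0 (clip t1) - RInt (fun u => G u (picard_lim u)) x0 (clip t2)
    = RInt (fun u => G u (picard_lim u)) (clip t2) (clip t1)) by (rewrite <- Ec; ring).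
  rewrite E.
  apply Rle_trans with (B * Rabs (clip t1 - clip t2)).
  - apply RInt_bound_const; [exact Hch| intros; apply Hbd].
  - apply Rmult_le_compat_l; [lra| apply clip_lip].
Qed.

Lemma picard_lim_cont t : continuous picard_lim t.
Proof.
  apply (lip_continuous picard_lim (B + 1)); [lra|]. intros x y.
  apply Rle_trans with (1 := picard_lim_lip x y). assert (0 <= Rabs (x - y)) by apply Rabs_pos. nra.
Qed.

Lemma picard_lim_derive t : -1 < t < 2 -> is_derive picard_lim t (G t (picard_lim t)).
Proof.
  intros Ht.
  apply is_derive_ext_loc with (fun u => s + RInt (fun v => G v (picard_lim v)) x0 u).
  - generalize (locally_interval (-1) 2 t Ht). apply filter_imp. intros u Hu.
    destruct (picard_lim_fixpoint u) as [E _]. rewrite E, clip_id by lra. reflexivity.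
  - replace (G t (picard_lim t)) with (0 + G t (picard_lim t)) by ring.
    apply (is_derive_plus (fun _ => s)); [apply (@is_derive_const R_AbsRing R_NormedModule)|].
    apply (is_derive_RInt (fun v => G v (picard_lim v)) (fun u => RInt (fun v => G v (picard_lim v)) x0 u) x0 t).
    + apply filter_forall. intros u. apply (@RInt_correct R_CompleteNormedModule).
      apply (@ex_RInt_continuous R_CompleteNormedModule). intros z _. apply Hcont, picard_lim_cont.
    + apply Hcont, picard_lim_cont.
Qed.

Lemma picard_lim_init : picard_lim x0 = s.
Proof.
  destruct (picard_lim_fixpoint x0) as [E _]. rewrite E, clip_id, RInt_empty by lra. apply Rplus_0_r.
Qed.

End Picard.

Lemma picard_exists (G : R -> R -> R) L B x0 s : 0 < L -> 0 <= B ->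
  (forall t y1 y2, Rabs (G t y1 - G t y2) <= L * Rabs (y1 - y2)) ->
  (forall t y, Rabs (G t y) <= B) ->
  (forall y : R -> R, (forall t, continuous y t) -> forall t, continuous (fun u => G u (y u)) t) ->
  -1 <= x0 <= 2 ->
  exists Y : R -> R, Y x0 = s /\ (forall t, continuous Y t) /\ (forall t, -1 < t < 2 -> is_derive Y t (G t (Y t))).
Proof.
  intros HL HB Hlip Hbd Hcont Hx0. exists (picard_lim G x0 s).
  split; [apply (picard_lim_init G L B)|]; auto.
  split; intros; [apply (picard_lim_cont G L B)| apply (picard_lim_derive G L B)]; auto.
Qed.

(* Projection of R onto [0, 1], used to extend h and q to R. *)
Definition clamp01 (x : R) := Rmax 0 (Rmin 1 x).

Lemma clamp01_lip x y : Rabs (clamp01 x - clamp01 y) <= Rabs (x - y).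
Proof. unfold clamp01, Rmax, Rmin. repeat destruct Rle_dec; unfold Rabs; repeat destruct Rcase_abs; lra. Qed.

Lemma clamp01_in x : in01 (clamp01 x).
Proof. unfold in01, clamp01, Rmax, Rmin. repeat destruct Rle_dec; lra. Qed.

Lemma clamp01_id x : in01 x -> clamp01 x = x.
Proof. unfold in01, clamp01, Rmax, Rmin. intros. repeat destruct Rle_dec; lra. Qed.

Lemma cont01_clamp (g : R -> R) : cont01 g -> forall t, continuous (fun x => g (clamp01 x)) t.
Proof.
  intros Hg t. apply filterlim_locally. intros eps.
  destruct (proj1 (filterlim_locally _ _) (Hg (clamp01 t) (clamp01_in t)) eps) as [d Hd].
  exists d. intros y Hy. apply Hd; [|apply clamp01_in].
  apply ball_R. apply ball_R in Hy. apply Rle_lt_trans with (2 := Hy), clamp01_lip.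
Qed.

Lemma cont01_interior (g : R -> R) t : cont01 g -> 0 < t < 1 -> continuous g t.
Proof.
  intros Hg Ht. apply (continuous_ext_loc g (fun x => g (clamp01 x)) t); [|apply cont01_clamp, Hg].
  generalize (locally_interval 0 1 t Ht). apply filter_imp. intros u Hu.
  rewrite clamp01_id; [reflexivity| unfold in01; lra].
Qed.

Lemma cont01_bounded (g : R -> R) : cont01 g -> exists M, 0 <= M /\ forall t, in01 t -> Rabs (g t) <= M.
Proof.
  intros Hg.
  destruct (continuity_ab_maj (fun t => Rabs (g (clamp01 t))) 0 1 ltac:(lra)) as [Mx [HM _]].
  { intros c _. apply continuity_pt_filterlim, (continuous_Rabs_comp (fun t => g (clamp01 t))), cont01_clamp, Hg. }
  exists (Rabs (g (clamp01 Mx))). split; [apply Rabs_pos|]. intros t Ht.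
  rewrite <- (clamp01_id t Ht). apply HM, Ht.
Qed.

Lemma margin (Y : R -> R) a b e : (forall t, continuous Y t) -> a <= b -> 0 < e ->
  (forall t, a <= t <= b -> Y t <= - 2 * e) -> exists d, 0 < d /\ forall t, a - d < t < b + d -> Y t < - e.
Proof.
  intros Hc Hab He HY.
  destruct (continuous_ed Y a e (Hc a) He) as [da [Hda Ha]].
  destruct (continuous_ed Y b e (Hc b) He) as [db [Hdb Hb]].
  exists (Rmin da db). split; [apply Rmin_glb_lt; lra|].
  intros t Ht. assert (Rmin da db <= da) by apply Rmin_l. assert (Rmin da db <= db) by apply Rmin_r.
  destruct (Rlt_or_le t a) as [Hta|Hta]; [|destruct (Rle_or_lt t b) as [Htb|Htb]].
  - specialize (Ha t ltac:(apply Rabs_def1; lra)). specialize (HY a ltac:(lra)). apply Rabs_def2 in Ha. lra.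
  - specialize (HY t ltac:(lra)). lra.
  - specialize (Hb t ltac:(apply Rabs_def1; lra)). specialize (HY b ltac:(lra)). apply Rabs_def2 in Hb. lra.
Qed.

Lemma ineq_at_1 (f g : R -> R) x0 : 0 <= x0 < 1 ->
  filterlim f (within in01 (locally 1)) (locally (f 1)) ->
  filterlim g (within in01 (locally 1)) (locally (g 1)) ->
  (forall t, x0 < t < 1 -> g t <= f t) -> g 1 <= f 1.
Proof.
  intros Hx Hf Hg Hle. apply Rnot_lt_le. intro Hn.
  destruct (within01_ed f 1 ((g 1 - f 1) / 2) Hf ltac:(lra)) as [df [Hdf Hf']].
  destruct (within01_ed g 1 ((g 1 - f 1) / 2) Hg ltac:(lra)) as [dg [Hdg Hg']].
  set (t := Rmax ((x0 + 1) / 2) (1 - Rmin df dg / 2)).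
  assert (Hm : 0 < Rmin df dg <= df /\ Rmin df dg <= dg)
    by (split; [split; [apply Rmin_glb_lt; lra| apply Rmin_l]| apply Rmin_r]).
  assert (Ht : x0 < t < 1 /\ 1 - Rmin df dg / 2 <= t).
  { unfold t. split; [split|apply Rmax_r].
    - apply Rlt_le_trans with ((x0 + 1) / 2); [lra| apply Rmax_l].
    - apply Rmax_lub_lt; lra. }
  specialize (Hf' t ltac:(unfold in01; lra) ltac:(rewrite Rabs_left; lra)).
  specialize (Hg' t ltac:(unfold in01; lra) ltac:(rewrite Rabs_left; lra)).
  apply Rabs_def2 in Hf', Hg'. specialize (Hle t ltac:(lra)). lra.
Qed.

Lemma continuous_within01 (f : R -> R) x : continuous f x ->
  filterlim f (within in01 (locally x)) (locally (f x)).
Proof. intros H. apply (filterlim_filter_le_1 _ (filter_le_within _)), H. Qed.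

Definition vanishes_at (Z : R -> R) (x : R) :=
  forall eps, 0 < eps -> exists d, 0 < d /\ forall t, 0 < t < 1 -> Rabs (t - x) < d -> Rabs (Z t) < eps.

Lemma vanishes_at_0_squeeze (Z g : R -> R) k x0 : 0 < k -> 0 < x0 -> cont01 g -> g 0 = 0 ->
  (forall t, 0 < t <= x0 -> - k * t <= Z t <= g t) -> vanishes_at Z 0.
Proof.
  intros Hk Hx0 Hg Hg0 Hsq eps Heps.
  destruct (cont01_ed g 0 eps Hg ltac:(unfold in01; lra) Heps) as [dz [Hdz Hgz]].
  set (d := Rmin x0 (Rmin dz (eps / (k + 1)))).
  assert (Hd : 0 < d /\ d <= x0 /\ d <= dz /\ d <= eps / (k + 1)).
  { unfold d. repeat split.
    - apply Rmin_glb_lt; [lra| apply Rmin_glb_lt; [lra| apply Rdiv_lt_0_compat; lra]].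
    - apply Rmin_l.
    - eapply Rle_trans; [apply Rmin_r| apply Rmin_l].
    - eapply Rle_trans; [apply Rmin_r| apply Rmin_r]. }
  exists d. split; [lra|]. intros t Ht Htd. rewrite Rminus_0_r, Rabs_right in Htd by lra.
  destruct (Hsq t ltac:(lra)) as [A1 A2].
  specialize (Hgz t ltac:(unfold in01; lra) ltac:(rewrite Rminus_0_r, Rabs_right; lra)).
  rewrite Hg0, Rminus_0_r in Hgz. apply Rabs_def2 in Hgz.
  assert (k * t < eps).
  { apply Rle_lt_trans with (k * (eps / (k + 1))); [apply Rmult_le_compat_l; lra|].
    assert (E : eps - k * (eps / (k + 1)) = eps / (k + 1)) by (field; lra).
    assert (0 < eps / (k + 1)) by (apply Rdiv_lt_0_compat; lra). lra. }
  apply Rabs_def1; lra.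
Qed.

Definition ext01 (Z : R -> R) (t : R) : R :=
  match Rlt_dec 0 t with
  | left _ => match Rlt_dec t 1 with left _ => Z t | right _ => 0 end
  | right _ => 0
  end.

Lemma ext01_in Z t : 0 < t < 1 -> ext01 Z t = Z t.
Proof. intros Ht. unfold ext01. destruct Rlt_dec; [destruct Rlt_dec|]; lra || reflexivity. Qed.

Lemma ext01_out Z t : ~ (0 < t < 1) -> ext01 Z t = 0.
Proof. intros Ht. unfold ext01. destruct Rlt_dec; [destruct Rlt_dec|]; auto. exfalso; apply Ht; lra. Qed.

Lemma ext01_cont_endpoint Z x : x = 0 \/ x = 1 -> vanishes_at Z x ->
  filterlim (ext01 Z) (within in01 (locally x)) (locally (ext01 Z x)).
Proof.
  intros Hx HZ. rewrite (ext01_out Z x) by lra. apply filterlim_locally. intros eps.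
  destruct (HZ eps (cond_pos eps)) as [d [Hd Hdd]].
  exists (mkposreal d Hd). intros y Hy Hyin. apply ball_R. rewrite Rminus_0_r.
  assert (Hy' : Rabs (y - x) < d) by (apply ball_R; exact Hy).
  destruct (Rlt_dec 0 y); [destruct (Rlt_dec y 1)|].
  - rewrite ext01_in by lra. apply Hdd; [lra| exact Hy'].
  - rewrite ext01_out, Rabs_R0 by lra. apply cond_pos.
  - rewrite ext01_out, Rabs_R0 by lra. apply cond_pos.
Qed.

(** * The equation z' = h - c - q/z *)

Section Equation.
Variables (h q : R -> R).
Hypothesis Hh : cont01 h.
Hypothesis Hq : cond_q q.

Definition rhs (c t y : R) := h t - c - q t / y.

Lemma rhs_shift c1 c2 t y : rhs c1 t y = rhs c2 t y - (c1 - c2).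
Proof. unfold rhs. ring. Qed.

Lemma q_nonneg x : in01 x -> 0 <= q x.
Proof.
  intros [H0 H1]. destruct Hq as [_ [Hp [Hq0 [Hq1 _]]]].
  destruct H0 as [H0|H0]; [destruct H1 as [H1|H1]|]; subst; try lra.
  left; apply Hp; split; lra.
Qed.

Definition solves (c : R) (Z : R -> R) (al be : R) :=
  forall t, al < t < be -> Z t < 0 /\ is_derive Z t (rhs c t (Z t)).

(* h and q extended by clamping, and 1/y frozen below -eta: the result is
   bounded and globally Lipschitz in y, and equals rhs where y <= -eta. *)
Definition rhs_trunc (c eta t y : R) := h (clamp01 t) - c - q (clamp01 t) / Rmin y (- eta).

Lemma rhs_trunc_true c eta t y : 0 < t < 1 -> y <= - eta -> rhs_trunc c eta t y = rhs c t y.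
Proof.
  intros Ht Hy. unfold rhs_trunc, rhs. rewrite clamp01_id by (unfold in01; lra).
  rewrite Rmin_left by lra. reflexivity.
Qed.

Lemma rhs_trunc_eta c eta eta1 t y : y <= - eta1 -> eta <= eta1 -> rhs_trunc c eta t y = rhs_trunc c eta1 t y.
Proof. intros H1 H2. unfold rhs_trunc. rewrite !Rmin_left by lra. reflexivity. Qed.

Lemma rhs_trunc_lip c eta Qm : 0 < eta -> (forall t, in01 t -> q t <= Qm) -> forall t y1 y2,
  Rabs (rhs_trunc c eta t y1 - rhs_trunc c eta t y2) <= (Qm / eta ^ 2 + 1) * Rabs (y1 - y2).
Proof.
  intros He HQ t y1 y2. unfold rhs_trunc.
  set (m1 := Rmin y1 (- eta)). set (m2 := Rmin y2 (- eta)). set (qt := q (clamp01 t)).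
  assert (Hm1 : m1 <= - eta) by apply Rmin_r. assert (Hm2 : m2 <= - eta) by apply Rmin_r.
  assert (Hl : Rabs (m1 - m2) <= Rabs (y1 - y2))
    by (unfold m1, m2, Rmin; repeat destruct Rle_dec; unfold Rabs; repeat destruct Rcase_abs; lra).
  assert (Hq0 : 0 <= qt) by apply q_nonneg, clamp01_in.
  assert (HqQ : qt <= Qm) by apply HQ, clamp01_in.
  replace (h (clamp01 t) - c - qt / m1 - (h (clamp01 t) - c - qt / m2)) with (qt * (m1 - m2) / (m1 * m2))
    by (field; lra).
  unfold Rdiv. rewrite !Rabs_mult, (Rabs_right qt), (Rabs_right (/ (m1 * m2))) by
    (try apply Rle_ge, Rlt_le, Rinv_0_lt_compat; nra).
  assert (/ (m1 * m2) <= / eta ^ 2) by (apply Rinv_le_contravar; nra).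
  assert (0 < / eta ^ 2) by (apply Rinv_0_lt_compat; nra).
  assert (0 <= Rabs (m1 - m2)) by apply Rabs_pos. assert (0 <= Rabs (y1 - y2)) by apply Rabs_pos.
  assert (qt * Rabs (m1 - m2) <= Qm * Rabs (y1 - y2)) by (apply Rmult_le_compat; lra).
  assert (qt * Rabs (m1 - m2) * / (m1 * m2) <= Qm * Rabs (y1 - y2) * / eta ^ 2).
  { apply Rmult_le_compat; try lra. apply Rmult_le_pos; lra.
    apply Rlt_le, Rinv_0_lt_compat; nra. }
  nra.
Qed.

Lemma rhs_trunc_bound c eta Hm Qm : 0 < eta -> (forall t, in01 t -> Rabs (h t) <= Hm) ->
  (forall t, in01 t -> q t <= Qm) -> forall t y, Rabs (rhs_trunc c eta t y) <= Hm + Rabs c + Qm / eta.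
Proof.
  intros He HH HQ t y. unfold rhs_trunc.
  set (m := Rmin y (- eta)). assert (Hm1 : m <= - eta) by apply Rmin_r.
  assert (Hq0 : 0 <= q (clamp01 t)) by apply q_nonneg, clamp01_in.
  assert (Rabs (q (clamp01 t) / m) <= Qm / eta).
  { unfold Rdiv. rewrite Rabs_mult, (Rabs_right (q (clamp01 t))), Rabs_inv, Rabs_left by lra.
    apply Rmult_le_compat; [lra| apply Rlt_le, Rinv_0_lt_compat; lra| apply HQ, clamp01_in|
      apply Rinv_le_contravar; lra]. }
  assert (Rabs (h (clamp01 t)) <= Hm) by apply HH, clamp01_in.
  assert (Rabs (h (clamp01 t) - c - q (clamp01 t) / m)
    <= Rabs (h (clamp01 t)) + Rabs c + Rabs (q (clamp01 t) / m)).
  { unfold Rminus. eapply Rle_trans; [apply Rabs_triang|]. rewrite Rabs_Ropp.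
    apply Rplus_le_compat_r. eapply Rle_trans; [apply Rabs_triang|]. rewrite Rabs_Ropp. lra. }
  lra.
Qed.

Lemma rhs_trunc_cont c eta : 0 < eta -> forall y : R -> R, (forall t, continuous y t) ->
  forall t, continuous (fun u => rhs_trunc c eta u (y u)) t.
Proof.
  intros He y Hy t. unfold rhs_trunc.
  assert (Hmc : continuous (fun u => Rmin (y u) (- eta)) t).
  { apply (continuous_comp y (fun z => Rmin z (- eta))); [apply Hy|].
    apply (lip_continuous _ 1); [lra|]. intros; rewrite Rmult_1_l.
    unfold Rmin; repeat destruct Rle_dec; unfold Rabs; repeat destruct Rcase_abs; lra. }
  assert (Hmn : Rmin (y t) (- eta) <> 0) by (assert (Rmin (y t) (- eta) <= - eta) by apply Rmin_r; lra).
  apply (continuous_minus (fun u => h (clamp01 u) - c)).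
  - apply (continuous_minus (fun u => h (clamp01 u))); [apply cont01_clamp, Hh| apply continuous_const].
  - apply (continuous_mult (fun u => q (clamp01 u))); [apply cont01_clamp, Hq|].
    apply (continuous_Rinv_comp _ _ Hmc Hmn).
Qed.

Lemma rhs_trunc_constants eta : 0 < eta -> exists L B, 0 < L /\ 0 <= B /\ forall c,
  (forall t y1 y2, Rabs (rhs_trunc c eta t y1 - rhs_trunc c eta t y2) <= L * Rabs (y1 - y2)) /\
  (forall t y, Rabs (rhs_trunc c eta t y) <= B + Rabs c).
Proof.
  intros He. destruct (cont01_bounded h Hh) as [Hm [HHm HH]].
  destruct (cont01_bounded q (proj1 Hq)) as [Qm [HQm HQ]].
  assert (HQ' : forall t, in01 t -> q t <= Qm) by (intros t Ht; eapply Rle_trans; [apply Rle_abs| apply HQ, Ht]).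
  assert (0 <= Qm / eta ^ 2) by (apply Rmult_le_pos; [lra| apply Rlt_le, Rinv_0_lt_compat; nra]).
  assert (0 <= Qm / eta) by (apply Rmult_le_pos; [lra| apply Rlt_le, Rinv_0_lt_compat; lra]).
  exists (Qm / eta ^ 2 + 1), (Hm + Qm / eta). split; [lra| split; [lra|]]. intros c. split.
  - apply rhs_trunc_lip; assumption.
  - intros t y. assert (Hty := rhs_trunc_bound c eta Hm Qm He HH HQ' t y). lra.
Qed.

Definition tsol (c eta x0 s : R) : R -> R :=
  epsilon (inhabits (fun _ : R => 0)) (fun Y => Y x0 = s /\ (forall t, continuous Y t) /\
    (forall t, -1 < t < 2 -> is_derive Y t (rhs_trunc c eta t (Y t)))).

Lemma tsol_spec c eta x0 s : 0 < eta -> 0 <= x0 <= 1 ->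
  tsol c eta x0 s x0 = s /\ (forall t, continuous (tsol c eta x0 s) t) /\
  (forall t, -1 < t < 2 -> is_derive (tsol c eta x0 s) t (rhs_trunc c eta t (tsol c eta x0 s t))).
Proof.
  intros He Hx. unfold tsol. apply epsilon_spec.
  destruct (rhs_trunc_constants eta He) as [L [B [HL [HB HLB]]]]. destruct (HLB c) as [Hlip Hbd].
  apply (picard_exists (rhs_trunc c eta) L (B + Rabs c) x0 s); auto.
  - assert (H := Rabs_pos c). lra.
  - apply rhs_trunc_cont, He.
  - lra.
Qed.

Lemma trunc_dependence eta : 0 < eta -> exists K, 0 < K /\ forall c1 c2 (Y1 Y2 : R -> R) a b x0,
  0 <= a -> a <= x0 -> x0 <= b -> b <= 1 ->
  (forall t, a <= t <= b -> is_derive Y1 t (rhs_trunc c1 eta t (Y1 t)) /\ is_derive Y2 t (rhs_trunc c2 eta t (Y2 t))) ->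
  forall t, a <= t <= b -> (Y1 t - Y2 t) ^ 2 <= K * ((Y1 x0 - Y2 x0) ^ 2 + (c1 - c2) ^ 2).
Proof.
  intros He. destruct (rhs_trunc_constants eta He) as [L [B [HL [_ HLB]]]].
  exists (exp (2 * L + 1)). split; [apply exp_pos|].
  intros c1 c2 Y1 Y2 a b x0 Ha Hax Hxb Hb Hd t Ht.
  assert (Hbound : forall u, Rabs (rhs_trunc c1 eta u (Y1 u) - rhs_trunc c2 eta u (Y2 u))
                             <= L * Rabs (Y1 u - Y2 u) + Rabs (c1 - c2)).
  { intros u. replace (rhs_trunc c1 eta u (Y1 u) - rhs_trunc c2 eta u (Y2 u)) with
      ((rhs_trunc c1 eta u (Y1 u) - rhs_trunc c1 eta u (Y2 u)) + (c2 - c1)) by (unfold rhs_trunc; ring).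
    eapply Rle_trans; [apply Rabs_triang|]. rewrite (Rabs_minus_sym c2 c1).
    apply Rplus_le_compat_r, (proj1 (HLB c1)). }
  assert (Hce : Rabs (c1 - c2) ^ 2 = (c1 - c2) ^ 2) by (unfold Rabs; destruct Rcase_abs; ring).
  assert (0 <= (Y1 x0 - Y2 x0) ^ 2 + (c1 - c2) ^ 2) by (assert (H1 := pow2_ge_0 (Y1 x0 - Y2 x0)); assert (H2 := pow2_ge_0 (c1 - c2)); lra).
  destruct (Rle_or_lt x0 t) as [Hxt|Hxt].
  - assert (HG := gronwall_fwd Y1 Y2 _ _ L (Rabs (c1 - c2)) x0 b ltac:(lra) (Rabs_pos _)
      (fun u Hu => Hd u ltac:(lra)) (fun u _ => Hbound u) t ltac:(lra)).
    rewrite Hce in HG. eapply Rle_trans; [exact HG|]. rewrite Rmult_comm.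
    apply Rmult_le_compat_r; [lra| apply exp_le; nra].
  - assert (HG := gronwall_bwd Y1 Y2 _ _ L (Rabs (c1 - c2)) a x0 ltac:(lra) (Rabs_pos _)
      (fun u Hu => Hd u ltac:(lra)) (fun u _ => Hbound u) t ltac:(lra)).
    rewrite Hce in HG. eapply Rle_trans; [exact HG|]. rewrite Rmult_comm.
    apply Rmult_le_compat_r; [lra| apply exp_le; nra].
Qed.

Lemma trunc_uniqueness c eta (Y1 Y2 : R -> R) a b x0 : 0 < eta ->
  0 <= a -> a <= x0 -> x0 <= b -> b <= 1 ->
  (forall t, a <= t <= b -> is_derive Y1 t (rhs_trunc c eta t (Y1 t)) /\ is_derive Y2 t (rhs_trunc c eta t (Y2 t))) ->
  Y1 x0 = Y2 x0 -> forall t, a <= t <= b -> Y1 t = Y2 t.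
Proof.
  intros He Ha Hax Hxb Hb Hd Heq t Ht.
  destruct (trunc_dependence eta He) as [K [HK HKd]].
  assert (H := HKd c c Y1 Y2 a b x0 Ha Hax Hxb Hb Hd t Ht).
  rewrite Heq, Rminus_diag, Rminus_diag in H.
  assert (H2 := pow2_ge_0 (Y1 t - Y2 t)). assert ((Y1 t - Y2 t) ^ 2 = 0) by nra. nra.
Qed.

Lemma solves_sub c Z al be al' be' : solves c Z al be -> al <= al' -> be' <= be -> solves c Z al' be'.
Proof. intros HZ H1 H2 t Ht. apply HZ. lra. Qed.

Lemma solves_cont c Z al be t : solves c Z al be -> al < t < be -> continuous Z t.
Proof. intros HZ Ht. apply (continuous_of_derive _ _ _ (proj2 (HZ t Ht))). Qed.

Lemma tsol_solves c eta x0 s al be : 0 < eta -> 0 <= x0 <= 1 -> 0 <= al -> be <= 1 ->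
  (forall t, al < t < be -> tsol c eta x0 s t <= - eta) -> solves c (tsol c eta x0 s) al be.
Proof.
  intros He Hx Hal Hbe Hb t Ht. destruct (tsol_spec c eta x0 s He Hx) as [_ [_ D]].
  split; [specialize (Hb t Ht); lra|].
  rewrite <- (rhs_trunc_true c eta t _ ltac:(lra) (Hb t Ht)). apply D. lra.
Qed.

Lemma tsol_true_near c e x0 s T : 0 < e -> 0 <= x0 <= 1 -> 0 < T < 1 -> tsol c e x0 s T <= - 2 * e ->
  exists d, 0 < d /\ d <= T /\ T + d <= 1 /\ solves c (tsol c e x0 s) (T - d) (T + d).
Proof.
  intros He Hx HT Hy. destruct (tsol_spec c e x0 s He Hx) as [_ [Cy _]].
  destruct (margin _ T T e Cy ltac:(lra) He ltac:(intros t Ht; replace t with T by lra; exact Hy)) as [d [Hd Hyd]].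
  set (d' := Rmin d (Rmin T (1 - T))).
  assert (d' <= d /\ d' <= T /\ d' <= 1 - T /\ 0 < d') as [H1 [H2 [H3 H4]]].
  { unfold d'. repeat split; [apply Rmin_l| | |repeat apply Rmin_glb_lt; lra].
    - eapply Rle_trans; [apply Rmin_r| apply Rmin_l].
    - eapply Rle_trans; [apply Rmin_r| apply Rmin_r]. }
  exists d'. split; [lra| split; [lra| split; [lra|]]].
  apply tsol_solves; try lra. intros t Ht. specialize (Hyd t ltac:(lra)). lra.
Qed.

Definition sol_pair c (Z V rho : R -> R) al be :=
  forall t, al < t < be -> Z t < 0 /\ V t < 0 /\ is_derive Z t (rhs c t (Z t)) /\
    is_derive V t (rhs c t (V t) - rho t).

Lemma sol_pair_of_solves c c' Z V al be : solves c Z al be -> solves c' V al be ->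
  sol_pair c Z V (fun _ => c' - c) al be.
Proof.
  intros HZ HV t Ht. destruct (HZ t Ht) as [Z1 Z2]. destruct (HV t Ht) as [V1 V2].
  split; [|split; [|split]]; auto. cbv beta. rewrite <- rhs_shift. exact V2.
Qed.

Lemma sol_pair_linear c Z V rho al be : 0 <= al -> be <= 1 -> sol_pair c Z V rho al be ->
  forall t, al < t < be -> continuous (fun u => q u / (Z u * V u)) t /\
    is_derive (fun u => Z u - V u) t (q t / (Z t * V t) * (Z t - V t) + rho t).
Proof.
  intros Hal Hbe Hp t Ht. destruct (Hp t Ht) as [HZ [HV [H1 H2]]]. split.
  - apply (continuous_mult q); [apply cont01_interior; [apply Hq| lra]|].
    apply continuous_Rinv_comp; [|nra].
    apply (continuous_mult Z V); eapply continuous_of_derive; eassumption.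
  - replace (q t / (Z t * V t) * (Z t - V t) + rho t) with (rhs c t (Z t) - (rhs c t (V t) - rho t))
      by (unfold rhs; field; split; lra).
    apply (is_derive_minus Z V t _ _ H1 H2).
Qed.

Lemma compare_fwd c Z V rho al be a b : 0 <= al -> al < a -> b < be -> be <= 1 ->
  sol_pair c Z V rho al be -> (forall t, a <= t <= b -> 0 <= rho t) ->
  V a <= Z a -> forall t, a <= t <= b -> V t <= Z t.
Proof.
  intros Hal Ha Hb Hbe Hp Hr Hab t Ht. enough (0 <= Z t - V t) by lra.
  apply (linear_ineq_fwd (fun u => Z u - V u) (fun u => q u / (Z u * V u)) rho al be
    (sol_pair_linear c Z V rho al be Hal Hbe Hp) a b Ha Hb Hr); lra.
Qed.

Lemma compare_bwd c Z V rho al be a b : 0 <= al -> al < a -> b < be -> be <= 1 ->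
  sol_pair c Z V rho al be -> (forall t, a <= t <= b -> rho t <= 0) ->
  V b <= Z b -> forall t, a <= t <= b -> V t <= Z t.
Proof.
  intros Hal Ha Hb Hbe Hp Hr Hab t Ht. enough (0 <= Z t - V t) by lra.
  apply (linear_ineq_bwd (fun u => Z u - V u) (fun u => q u / (Z u * V u)) rho al be
    (sol_pair_linear c Z V rho al be Hal Hbe Hp) a b Ha Hb Hr); lra.
Qed.

Lemma difference_formula c Z V al be a b : 0 <= al -> al < a -> b < be -> be <= 1 ->
  solves c Z al be -> solves c V al be ->
  forall t, a <= t <= b -> Z t - V t = (Z a - V a) * exp (RInt (fun u => q u / (Z u * V u)) a t).
Proof.
  intros Hal Ha Hb Hbe HZ HV.
  assert (Hp := sol_pair_of_solves c c Z V al be HZ HV).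
  apply (linear_eq_formula (fun u => Z u - V u) (fun u => q u / (Z u * V u)) (fun _ => c - c) al be
    (sol_pair_linear c Z V _ al be Hal Hbe Hp) a b Ha Hb). intros; ring.
Qed.

Lemma coefficient_nonneg (Z V : R -> R) u : 0 < u < 1 -> Z u < 0 -> V u < 0 -> 0 <= q u / (Z u * V u).
Proof.
  intros Hu HZ HV. apply Rmult_le_pos; [apply q_nonneg; unfold in01; lra| apply Rlt_le, Rinv_0_lt_compat; nra].
Qed.

Lemma coefficient_integrable c (Z V : R -> R) al be a b : 0 <= al -> al < a -> a <= b -> b < be -> be <= 1 ->
  solves c Z al be -> solves c V al be -> ex_RInt (fun u => q u / (Z u * V u)) a b.
Proof.
  intros Hal Ha Hab Hb Hbe HZ HV.
  apply (ex_RInt_open _ al be); try lra. intros t Ht.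
  exact (proj1 (sol_pair_linear c Z V _ al be Hal Hbe (sol_pair_of_solves c c Z V al be HZ HV) t Ht)).
Qed.

(* A solution V of (P_c2), c2 <= c1, lying above a solution Z of (P_c1) on
   [a, T) cannot meet it at T (backward comparison near T). *)
Lemma no_first_touch c1 c2 (Z V : R -> R) a T d : c2 <= c1 -> a < T -> 0 < d <= T -> T + d <= 1 ->
  solves c1 Z (T - d) (T + d) -> solves c2 V (T - d) (T + d) ->
  (forall t, a <= t < T -> Z t < V t) -> V T = Z T -> False.
Proof.
  intros Hc Ha Hd HTd HZ HV Hlt HT.
  set (a' := Rmax a (T - d / 2)).
  assert (Ha' : a <= a' < T /\ T - d / 2 <= a')
    by (unfold a'; split; [split; [apply Rmax_l| apply Rmax_lub_lt; lra]| apply Rmax_r]).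
  assert (H := compare_bwd c1 Z V _ (T - d) (T + d) a' T ltac:(lra) ltac:(lra) ltac:(lra) ltac:(lra)
    (sol_pair_of_solves c1 c2 Z V _ _ HZ HV) ltac:(intros; lra) ltac:(lra) a' ltac:(lra)).
  specialize (Hlt a' ltac:(lra)). lra.
Qed.

Definition tsol_below c eta x0 s a b := 0 < eta /\ forall t, a <= t <= b -> tsol c eta x0 s t <= - eta.

Lemma tsol_below_mono c e e1 x0 s a b : tsol_below c e1 x0 s a b -> 0 < e -> e <= e1 ->
  0 <= a -> a <= x0 -> x0 <= b -> b <= 1 ->
  tsol_below c e x0 s a b /\ forall t, a <= t <= b -> tsol c e x0 s t = tsol c e1 x0 s t.
Proof.
  intros [He1 Hb] He Hee Ha Hax Hxb Hb1.
  destruct (tsol_spec c e x0 s He ltac:(lra)) as [S1 [_ D1]].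
  destruct (tsol_spec c e1 x0 s He1 ltac:(lra)) as [S2 [_ D2]].
  assert (Heq : forall t, a <= t <= b -> tsol c e x0 s t = tsol c e1 x0 s t).
  { apply (trunc_uniqueness c e _ _ a b x0 He Ha Hax Hxb Hb1); [|rewrite S1, S2; reflexivity].
    intros u Hu. split; [apply D1; lra|].
    rewrite (rhs_trunc_eta c e e1 u _ (Hb u Hu) Hee). apply D2; lra. }
  split; [split; [exact He|]|exact Heq]. intros t Ht. rewrite Heq by exact Ht. specialize (Hb t Ht). lra.
Qed.

Lemma tsol_below_combine c ea eb x0 s a b : tsol_below c ea x0 s a x0 -> tsol_below c eb x0 s x0 b ->
  0 <= a -> a <= x0 -> x0 <= b -> b <= 1 -> tsol_below c (Rmin ea eb) x0 s a b.
Proof.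
  intros B1 B2 Ha Hax Hxb Hb.
  assert (He : 0 < Rmin ea eb) by (apply Rmin_glb_lt; [exact (proj1 B1)| exact (proj1 B2)]).
  destruct (tsol_below_mono c _ ea x0 s a x0 B1 He (Rmin_l _ _) Ha Hax ltac:(lra) ltac:(lra)) as [[_ C1] _].
  destruct (tsol_below_mono c _ eb x0 s x0 b B2 He (Rmin_r _ _) ltac:(lra) ltac:(lra) Hxb Hb) as [[_ C2] _].
  split; [exact He|]. intros t Ht. destruct (Rle_or_lt t x0); [apply C1| apply C2]; lra.
Qed.

Lemma tsol_eq_solution c e x0 s (Z : R -> R) al be a b : 0 < e -> 0 <= al -> al < a -> a <= x0 -> x0 <= b ->
  b < be -> be <= 1 -> solves c Z al be -> Z x0 = s -> (forall t, a <= t <= b -> Z t <= - e) ->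
  forall t, a <= t <= b -> tsol c e x0 s t = Z t.
Proof.
  intros He Hal Ha Hax Hxb Hb Hbe HZ HZx HZb.
  destruct (tsol_spec c e x0 s He ltac:(lra)) as [S1 [_ D1]].
  apply (trunc_uniqueness c e _ _ a b x0 He ltac:(lra) Hax Hxb ltac:(lra)); [|rewrite S1, HZx; reflexivity].
  intros u Hu. split; [apply D1; lra|].
  rewrite (rhs_trunc_true c e u _ ltac:(lra) (HZb u Hu)). apply HZ; lra.
Qed.

Lemma glue c x0 s : 0 < x0 < 1 ->
  (forall a b, 0 < a -> a <= x0 -> x0 <= b -> b < 1 -> exists e, tsol_below c e x0 s a b) ->
  exists Z, Z x0 = s /\ solves c Z 0 1.
Proof.
  intros Hx Hyp.
  set (lo := fun t => Rmin t x0 / 2). set (hi := fun t => (Rmax t x0 + 1) / 2).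
  assert (Hlohi : forall t, 0 < t < 1 -> 0 < lo t < t /\ lo t < x0 /\ t < hi t < 1 /\ x0 < hi t).
  { intros t Ht. unfold lo, hi.
    assert (Rmin t x0 <= t) by apply Rmin_l. assert (Rmin t x0 <= x0) by apply Rmin_r.
    assert (t <= Rmax t x0) by apply Rmax_l. assert (x0 <= Rmax t x0) by apply Rmax_r.
    assert (0 < Rmin t x0) by (apply Rmin_glb_lt; lra). assert (Rmax t x0 < 1) by (apply Rmax_lub_lt; lra).
    lra. }
  set (eta := fun t => epsilon (inhabits 1) (fun e => tsol_below c e x0 s (lo t) (hi t))).
  assert (Heta : forall t, 0 < t < 1 -> tsol_below c (eta t) x0 s (lo t) (hi t)).
  { intros t Ht. apply epsilon_spec. destruct (Hlohi t Ht) as [A1 [A2 [A3 A4]]]. apply Hyp; lra. }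
  assert (Hagree : forall t u, 0 < t < 1 -> 0 < u < 1 -> Rmax (lo t) (lo u) <= u <= Rmin (hi t) (hi u) ->
            tsol c (eta u) x0 s u = tsol c (eta t) x0 s u).
  { intros t u Ht Hu Hut. destruct (Hlohi t Ht) as [A1 [A2 [A3 A4]]]. destruct (Hlohi u Hu) as [B1 [B2 [B3 B4]]].
    assert (Hlo := Rmax_l (lo t) (lo u)). assert (Hlo' := Rmax_r (lo t) (lo u)).
    assert (Hhi := Rmin_l (hi t) (hi u)). assert (Hhi' := Rmin_r (hi t) (hi u)).
    set (e := Rmin (eta t) (eta u)).
    assert (He : 0 < e) by (apply Rmin_glb_lt; [apply (Heta t Ht)| apply (Heta u Hu)]).
    destruct (tsol_below_mono c e _ x0 s _ _ (Heta t Ht) He (Rmin_l _ _)) as [_ Et]; try lra.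
    destruct (tsol_below_mono c e _ x0 s _ _ (Heta u Hu) He (Rmin_r _ _)) as [_ Eu]; try lra.
    rewrite <- Et, <- Eu; lra. }
  exists (fun t => tsol c (eta t) x0 s t). split.
  - destruct (Heta x0 Hx) as [He _]. apply (tsol_spec c _ x0 s He). lra.
  - intros t Ht. destruct (Hlohi t Ht) as [A1 [A2 [A3 A4]]].
    assert (Hsol := tsol_solves c (eta t) x0 s (lo t) (hi t) ltac:(apply (Heta t Ht)) ltac:(lra) ltac:(lra) ltac:(lra)
      ltac:(intros u Hu; apply (Heta t Ht); lra) t ltac:(lra)).
    destruct Hsol as [Hneg Hder]. split; [exact Hneg|].
    apply (is_derive_ext_loc (tsol c (eta t) x0 s)); [|exact Hder].
    generalize (locally_interval (lo t) (hi t) t ltac:(lra)). apply filter_imp. intros u Hu.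
    symmetry. destruct (Hlohi u ltac:(lra)) as [B1 [B2 [B3 B4]]].
    apply Hagree; try lra. split; [apply Rmax_lub| apply Rmin_glb]; lra.
Qed.

Lemma le_at_right_end (f g : R -> R) a b : a < b -> continuous f b -> continuous g b ->
  (forall t, a <= t < b -> f t <= g t) -> f b <= g b.
Proof.
  intros Hab Hf Hg Hle. apply Rnot_lt_le. intro Hn.
  destruct (continuous_ed (fun t => f t - g t) b ((f b - g b) / 2) (continuous_minus f g b Hf Hg) ltac:(lra))
    as [d [Hd Hfg]].
  set (t := Rmax a (b - d / 2)).
  assert (Ht : a <= t < b /\ b - d / 2 <= t) by (unfold t; split; [split; [apply Rmax_l| apply Rmax_lub_lt; lra]| apply Rmax_r]).
  specialize (Hfg t ltac:(apply Rabs_def1; lra)). apply Rabs_def2 in Hfg. specialize (Hle t ltac:(lra)). lra.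
Qed.

Lemma h_minus_c_bound c : exists K, 0 <= K /\ forall t, in01 t -> - K <= h t - c.
Proof.
  destruct (cont01_bounded h Hh) as [Hm [HHm HH]]. exists (Hm + Rabs c).
  split; [assert (H := Rabs_pos c); lra|]. intros t Ht.
  assert (H1 := HH t Ht). assert (H2 := Rle_abs c).
  apply Rabs_le_between in H1. lra.
Qed.

(* The distance from 0 kept by negative solutions in solution_far_from_zero. *)
Definition eps_hit qm K D := Rmin 1 (Rmin (qm / (4 * K + 4)) (qm * D / 4)).

Lemma eps_hit_pos qm K D : 0 < qm -> 0 <= K -> 0 < D -> 0 < eps_hit qm K D.
Proof.
  intros. unfold eps_hit. apply Rmin_glb_lt; [lra|]. apply Rmin_glb_lt; apply Rdiv_lt_0_compat; nra.
Qed.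

(* With e := eps_hit qm K D and R := qm/(2e): a line of slope R starting at
   height >= -e reaches 0 within time D/2, and R + K <= qm/e. *)
Lemma eps_hit_spec qm K D : 0 < qm -> 0 <= K -> 0 < D ->
  eps_hit qm K D / (qm / (2 * eps_hit qm K D)) <= D / 2 /\
  qm / (2 * eps_hit qm K D) + K <= qm / eps_hit qm K D.
Proof.
  intros Hqm HK HD. assert (He := eps_hit_pos qm K D Hqm HK HD). set (e := eps_hit qm K D) in *.
  assert (He1 : e <= 1) by apply Rmin_l.
  assert (He2 : e <= qm / (4 * K + 4)) by (eapply Rle_trans; [apply Rmin_r| apply Rmin_l]).
  assert (He3 : e <= qm * D / 4) by (eapply Rle_trans; [apply Rmin_r| apply Rmin_r]).
  assert (Hee : e * e <= e) by nra.
  assert (Hq4 : (4 * K + 4) * e <= qm).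
  { apply Rmult_le_compat_l with (r := 4 * K + 4) in He2; [|lra].
    replace ((4 * K + 4) * (qm / (4 * K + 4))) with qm in He2 by (field; lra). exact He2. }
  assert (E1 : e / (qm / (2 * e)) = (2 * e * e) / qm) by (field; lra).
  assert (E2 : qm / e - qm / (2 * e) = qm / (2 * e)) by (field; lra).
  assert (Hqe : 2 * K + 2 <= qm / (2 * e)).
  { apply Rmult_le_reg_r with (2 * e); [lra|]. replace (qm / (2 * e) * (2 * e)) with qm by (field; lra). lra. }
  split; [rewrite E1| lra].
  apply Rmult_le_reg_r with qm; [lra|]. replace (2 * e * e / qm * qm) with (2 * e * e) by (field; lra).
  assert (e * qm <= qm * D / 4 * qm) by (apply Rmult_le_compat_r; lra). nra.
Qed.

Lemma line_subsolution c t y e qm K R : 0 < e -> - e <= y < 0 -> 0 < qm <= q t -> - K <= h t - c ->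
  R + K <= qm / e -> R <= rhs c t y.
Proof.
  intros He Hy Hq1 Hh1 HRK. unfold rhs.
  assert (qm / e <= - (q t / y)).
  { replace (- (q t / y)) with (q t / (- y)) by (field; lra).
    apply Rle_trans with (q t / e).
    - unfold Rdiv. apply Rmult_le_compat_r; [apply Rlt_le, Rinv_0_lt_compat| ]; lra.
    - unfold Rdiv. apply Rmult_le_compat_l; [lra| apply Rinv_le_contravar; lra]. }
  lra.
Qed.

(* If q >= qm > 0 and h - c >= -K on [a, a + D], a negative solution on that
   interval satisfies Z a < -eps_hit: otherwise it would stay above the line of
   slope qm / (2 eps_hit) through (a, Z a), which reaches 0 before a + D. *)
Lemma solution_far_from_zero c (Z : R -> R) al be a D qm K : 0 <= al -> al < a -> 0 < D -> a + D < be -> be <= 1 ->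
  0 < qm -> 0 <= K -> solves c Z al be ->
  (forall t, a <= t <= a + D -> qm <= q t) -> (forall t, a <= t <= a + D -> - K <= h t - c) ->
  Z a < - eps_hit qm K D.
Proof.
  intros Hal Ha HD Hbe Hbe1 Hqm HK HZ Hqb Hhb.
  assert (He := eps_hit_pos qm K D Hqm HK HD). destruct (eps_hit_spec qm K D Hqm HK HD) as [HeR HRK].
  set (e := eps_hit qm K D) in *. set (R := qm / (2 * e)) in *.
  assert (HR : 0 < R) by (apply Rdiv_lt_0_compat; lra).
  apply Rnot_le_lt. intro Hza. destruct (HZ a ltac:(lra)) as [Za0 _].
  set (ts := a - Z a / R).
  assert (Hts : a < ts <= a + D / 2).
  { assert (0 < - Z a / R) by (apply Rdiv_lt_0_compat; lra).
    assert (- Z a / R <= e / R) by (apply Rmult_le_compat_r; [apply Rlt_le, Rinv_0_lt_compat|]; lra).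
    unfold ts, Rdiv in *. lra. }
  set (l := fun t => Z a + R * (t - a)).
  assert (Hl : forall t, a <= t < ts -> - e <= l t < 0).
  { intros t Ht. assert (0 < R * (ts - t)) by (apply Rmult_lt_0_compat; lra).
    assert (0 <= R * (t - a)) by (apply Rmult_le_pos; lra).
    split; [unfold l; lra|]. replace (l t) with (- (R * (ts - t))) by (unfold l, ts; field; lra). lra. }
  assert (Hpair : sol_pair c Z l (fun t => rhs c t (l t) - R) al ts).
  { intros t Ht. destruct (HZ t ltac:(lra)) as [Z1 Z2]. split; [exact Z1|]. split.
    - destruct (Rlt_or_le t a) as [Hta|Hta]; [unfold l; nra| apply Hl; lra].
    - split; [exact Z2|]. replace (rhs c t (l t) - (rhs c t (l t) - R)) with R by ring.
      unfold l. auto_derive; auto. ring. }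
  assert (Habove : forall t, a <= t < ts -> l t <= Z t).
  { intros t Ht. apply (compare_fwd c Z l _ al ts a t Hal Ha ltac:(lra) ltac:(lra) Hpair); try lra.
    - intros u Hu. assert (Hs := line_subsolution c u (l u) e qm K R He (Hl u ltac:(lra))
        (conj Hqm (Hqb u ltac:(lra))) (Hhb u ltac:(lra)) HRK). lra.
    - unfold l. lra. }
  assert (Hlim := le_at_right_end l Z a ts ltac:(lra)
    ltac:(apply (ex_derive_continuous l); unfold l; auto_derive; auto)
    (solves_cont _ _ _ _ ts HZ ltac:(lra)) Habove).
  assert (Hl_ts : l ts = 0) by (unfold l, ts; field; lra).
  destruct (HZ ts ltac:(lra)) as [Zts _]. lra.
Qed.

Lemma P00_of_solution c (Z : R -> R) : solves c Z 0 1 -> vanishes_at Z 0 -> vanishes_at Z 1 ->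
  sol_P00 h q c (ext01 Z).
Proof.
  intros HZ H0 H1.
  assert (Hder : forall t, 0 < t < 1 -> is_derive (ext01 Z) t (rhs c t (ext01 Z t))).
  { intros t Ht. rewrite ext01_in by exact Ht. apply (is_derive_ext_loc Z); [|apply HZ, Ht].
    generalize (locally_interval 0 1 t Ht). apply filter_imp. intros u Hu. rewrite ext01_in; auto. }
  split; [split; [| split; [| split]] |].
  - intros x Hx. destruct (Rlt_dec 0 x); [destruct (Rlt_dec x 1)|].
    + apply continuous_within01. eapply continuous_of_derive, Hder. lra.
    + apply ext01_cont_endpoint; [unfold in01 in Hx; lra|]. replace x with 1 by (unfold in01 in Hx; lra). exact H1.
    + apply ext01_cont_endpoint; [unfold in01 in Hx; lra|]. replace x with 0 by (unfold in01 in Hx; lra). exact H0.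
  - intros x Hx. apply Hder, Hx.
  - intros x Hx. rewrite ext01_in by exact Hx. apply HZ, Hx.
  - apply ext01_out. lra.
  - apply ext01_out. lra.
Qed.

Section Shooting.
Variable x0 : R.
Hypothesis Hx0 : 0 < x0 < 1.

Definition stays_negative c s :=
  exists eta, 0 < eta /\ forall t, x0 <= t <= 1 -> tsol c eta x0 s t <= - 2 * eta.

Lemma stays_negative_of_solution c s (Z : R -> R) g : 0 < g -> solves c Z 0 1 ->
  Z x0 = s -> (forall t, x0 <= t < 1 -> Z t <= - g) -> stays_negative c s.
Proof.
  intros Hg HZ HZx HZb. exists (g / 2). split; [lra|].
  destruct (tsol_spec c (g / 2) x0 s ltac:(lra) ltac:(lra)) as [_ [Cs _]].
  assert (Hlt : forall t, x0 <= t < 1 -> tsol c (g / 2) x0 s t <= - g).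
  { intros t Ht.
    rewrite (tsol_eq_solution c (g / 2) x0 s Z 0 1 x0 t); try lra; try assumption; [apply HZb; lra|].
    intros u Hu. assert (H := HZb u ltac:(lra)). lra. }
  intros t Ht. destruct (Rlt_or_le t 1) as [Ht1|Ht1]; [specialize (Hlt t ltac:(lra)); lra|].
  replace t with 1 by lra.
  assert (H := le_at_right_end (tsol c (g / 2) x0 s) (fun _ => - g) x0 1 ltac:(lra) (Cs 1)
    ltac:(apply continuous_const) Hlt). lra.
Qed.

(* Staying negative is an open condition on (c, s) (continuous dependence). *)
Lemma stays_negative_open c s : stays_negative c s -> exists r, 0 < r /\ forall c2 s2,
  Rabs (c2 - c) <= r -> Rabs (s2 - s) <= r -> stays_negative c2 s2.
Proof.
  intros [eta [He Hg]].
  destruct (trunc_dependence eta He) as [K [HK Hdep]].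
  set (r := eta / (2 * (K + 1))).
  assert (Hr : (K + 1) * r = eta / 2) by (unfold r; field; lra).
  assert (Hr0 : 0 < r) by (unfold r; apply Rdiv_lt_0_compat; lra).
  exists r. split; [exact Hr0|]. intros c2 s2 Hc Hs.
  destruct (tsol_spec c eta x0 s He ltac:(lra)) as [S1 [_ D1]].
  destruct (tsol_spec c2 eta x0 s2 He ltac:(lra)) as [S2 [_ D2]].
  assert (Hb : forall t, x0 <= t <= 1 -> tsol c2 eta x0 s2 t <= - eta).
  { intros t Ht.
    assert (H := Hdep c2 c _ _ x0 1 x0 ltac:(lra) ltac:(lra) ltac:(lra) ltac:(lra)
      (fun u Hu => conj (D2 u ltac:(lra)) (D1 u ltac:(lra))) t Ht).
    rewrite S1, S2 in H. apply Rabs_le_between in Hc, Hs.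
    assert (K * ((s2 - s) ^ 2 + (c2 - c) ^ 2) <= eta ^ 2).
    { apply Rle_trans with (K * (2 * r ^ 2)); [apply Rmult_le_compat_l; nra|].
      assert (K * r <= eta / 2) by nra. assert (r <= eta / 2) by nra. nra. }
    specialize (Hg t Ht). nra. }
  exists (eta / 2). split; [lra|]. intros t Ht.
  destruct (tsol_below_mono c2 (eta / 2) eta x0 s2 x0 1 (conj He Hb)) as [_ E]; try lra.
  rewrite E by exact Ht. specialize (Hb t Ht). lra.
Qed.

(* Uniformly in s, the solutions that stay negative are below some -eh on
   [x0, b], b < 1, because q > 0 there (solution_far_from_zero). *)
Lemma stays_negative_uniform c b : x0 <= b < 1 -> exists eh, 0 < eh /\
  forall s, stays_negative c s -> forall t, x0 <= t <= b -> tsol c (eh / 2) x0 s t <= - eh.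
Proof.
  intros Hb. set (D := (1 - b) / 2).
  destruct (continuity_ab_min q x0 (b + D) ltac:(unfold D; lra)) as [mx [Hmx Hmxr]].
  { intros t Ht. apply continuity_pt_filterlim, cont01_interior; [apply Hq| unfold D in *; lra]. }
  assert (Hqm : 0 < q mx) by (destruct Hq as [_ [Hp _]]; apply Hp; unfold in01o, D in *; lra).
  destruct (h_minus_c_bound c) as [K [HK Hhb]].
  set (eh := eps_hit (q mx) K D). assert (Heh : 0 < eh) by (apply eps_hit_pos; unfold D; lra).
  exists eh. split; [exact Heh|]. intros s [eta [Heta Hg]].
  destruct (tsol_spec c eta x0 s Heta ltac:(lra)) as [S [Cy _]].
  destruct (margin _ x0 1 eta Cy ltac:(lra) Heta Hg) as [dl [Hdl Hy]].
  set (y := tsol c eta x0 s) in *.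
  set (al := Rmax (x0 - dl) (x0 / 2)).
  assert (Hal : x0 - dl <= al /\ x0 / 2 <= al /\ al < x0)
    by (unfold al; split; [apply Rmax_l| split; [apply Rmax_r| apply Rmax_lub_lt; lra]]).
  assert (Hsol : solves c y al 1).
  { apply tsol_solves; try lra. intros u Hu. change (y u <= - eta). specialize (Hy u ltac:(lra)). lra. }
  assert (Hyb : forall t, x0 <= t <= b -> y t <= - eh).
  { intros t Ht. apply Rlt_le, (solution_far_from_zero c y al 1 t D (q mx) K); try (unfold D; lra).
    - exact Hsol.
    - intros u Hu. apply Hmx. unfold D in *; lra.
    - intros u Hu. apply Hhb. unfold in01, D in *; lra. }
  intros t Ht. rewrite (tsol_eq_solution c (eh / 2) x0 s y al 1 x0 b); try lra; try assumption.
  - apply Hyb, Ht.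
  - intros u Hu. specialize (Hyb u Hu). lra.
Qed.

Lemma tsol_below_at_sup c sh : (forall r, 0 < r -> exists s, stays_negative c s /\ sh - r < s <= sh) ->
  forall b, x0 <= b < 1 -> exists e, tsol_below c e x0 sh x0 b.
Proof.
  intros Happ b Hb.
  destruct (stays_negative_uniform c b Hb) as [eh [Heh HA]].
  set (e := eh / 2). assert (He : 0 < e) by (unfold e; lra).
  destruct (trunc_dependence e He) as [Ke [HKe Hdep]].
  set (r := e / (Ke + 1)). assert (Hr : 0 < r) by (unfold r; apply Rdiv_lt_0_compat; lra).
  destruct (Happ r Hr) as [s [Hgs [Hs1 Hs2]]].
  exists e. split; [exact He|]. intros t Ht.
  destruct (tsol_spec c e x0 s He ltac:(lra)) as [S1 [_ D1]].
  destruct (tsol_spec c e x0 sh He ltac:(lra)) as [S2 [_ D2]].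
  assert (H := Hdep c c _ _ x0 b x0 ltac:(lra) ltac:(lra) ltac:(lra) ltac:(lra)
    (fun u Hu => conj (D2 u ltac:(lra)) (D1 u ltac:(lra))) t Ht).
  rewrite S1, S2, Rminus_diag in H.
  assert (Hrk : (Ke + 1) * r = e) by (unfold r; field; lra).
  assert (Hkr : Ke * r <= e) by lra. assert (Hre : r <= e) by nra.
  assert (Hsd : (sh - s) ^ 2 <= r ^ 2) by nra.
  assert (Ke * (sh - s) ^ 2 <= Ke * r ^ 2) by (apply Rmult_le_compat_l; lra).
  assert (Ke * r ^ 2 <= e ^ 2) by (replace (Ke * r ^ 2) with ((Ke * r) * r) by ring; nra).
  assert (HAs := HA s Hgs t Ht). fold e in HAs.
  assert (Hd2 : (tsol c e x0 sh t - tsol c e x0 s t) ^ 2 <= e ^ 2) by lra.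
  assert (Hdiff : tsol c e x0 sh t - tsol c e x0 s t <= e) by (apply Rnot_lt_le; intro; nra).
  unfold e in *. lra.
Qed.

(* A solution through (x0, s) that does not stay negative tends to 0 at 1:
   its derivative is bounded below, so it cannot oscillate away from 0. *)
Lemma vanishes_at_1 c s (Z : R -> R) : solves c Z 0 1 -> Z x0 = s -> ~ stays_negative c s ->
  vanishes_at Z 1.
Proof.
  intros HZ HZx Hng eps Heps. apply NNPP. intro Hn.
  assert (Hfreq : forall d, 0 < d -> exists t, 1 - d < t < 1 /\ Z t <= - eps).
  { intros d Hd. apply NNPP. intro Hn2. apply Hn. exists d. split; [exact Hd|]. intros t Ht Htd.
    destruct (HZ t Ht) as [Zt _]. rewrite Rabs_left by lra. apply Ropp_lt_cancel. rewrite Ropp_involutive.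
    apply Rnot_le_lt. intro Hle. apply Hn2. exists t. split; [apply Rabs_def2 in Htd; lra| exact Hle]. }
  destruct (h_minus_c_bound c) as [K [HK Hhb]].
  assert (HZd : forall t, 0 < t < 1 -> - K <= rhs c t (Z t)).
  { intros t Ht. destruct (HZ t Ht) as [Zn _]. unfold rhs.
    assert (0 <= - (q t / Z t)).
    { replace (- (q t / Z t)) with (q t / (- Z t)) by (field; lra).
      apply Rmult_le_pos; [apply q_nonneg; unfold in01; lra| apply Rlt_le, Rinv_0_lt_compat; lra]. }
    specialize (Hhb t ltac:(unfold in01; lra)). lra. }
  apply Hng. set (u0 := Rmax (1 - eps / (2 * (K + 1))) ((x0 + 1) / 2)).
  assert (Hepsk : 0 < eps / (2 * (K + 1))) by (apply Rdiv_lt_0_compat; lra).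
  assert (Hu0 : x0 < u0 < 1 /\ 1 - eps / (2 * (K + 1)) <= u0).
  { unfold u0. split; [split|apply Rmax_l].
    - eapply Rlt_le_trans; [| apply Rmax_r]; lra.
    - apply Rmax_lub_lt; lra. }
  destruct (neg_bounded_away Z x0 u0 ltac:(lra) (fun t Ht => continuous_of_derive _ _ _ (proj2 (HZ t ltac:(lra))))
    (fun t Ht => proj1 (HZ t ltac:(lra)))) as [bet [Hbet Hbt]].
  apply (stays_negative_of_solution c s Z (Rmin bet (eps / 2)) ltac:(apply Rmin_glb_lt; lra) HZ HZx).
  assert (Hmin := Rmin_l bet (eps / 2)). assert (Hmin' := Rmin_r bet (eps / 2)).
  intros t Ht. destruct (Rle_or_lt t u0) as [Htu|Htu]; [specialize (Hbt t ltac:(lra)); lra|].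
  destruct (Hfreq (1 - t) ltac:(lra)) as [t2 [Ht2 HZt2]].
  assert (Hmono : Z t + K * t <= Z t2 + K * t2).
  { apply (nondecreasing_of_derive (fun v => Z v + K * v) (fun v => rhs c v (Z v) + K)); [lra| |].
    - intros v Hv. apply (is_derive_plus Z (fun v => K * v)); [apply (proj2 (HZ v ltac:(lra)))|].
      auto_derive; auto; ring.
    - intros v Hv. specialize (HZd v ltac:(lra)). lra. }
  assert (K * (t2 - t) <= eps / 2).
  { apply Rle_trans with (K * (eps / (2 * (K + 1)))); [apply Rmult_le_compat_l; lra|].
    assert (E : eps / 2 - K * (eps / (2 * (K + 1))) = eps / (2 * (K + 1))) by (field; lra). lra. }
  lra.
Qed.

End Shooting.

Section Minimality.
(* zs solves (P^00_cs), no (P^00_c) is solvable for c < cs, the line -k t is a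
   strict upper barrier on (0, d1) for c in [cs - e1, cs], and, towards a
   contradiction, zs lies above the barrier at x0 < d1. *)
Variables (zs : R -> R) (cs k d1 e1 x0 : R).
Hypothesis Hzs : solves cs zs 0 1.
Hypothesis Hzc : cont01 zs.
Hypothesis Hz0 : zs 0 = 0.
Hypothesis Hz1 : zs 1 = 0.
Hypothesis Hk : 0 < k.
Hypothesis Hd1 : 0 < d1 < 1.
Hypothesis He1 : 0 < e1.
Hypothesis Hup : forall c t, cs - e1 <= c <= cs -> 0 < t < d1 -> rhs c t (- k * t) + k <= 0.
Hypothesis Hmin : forall c z, c < cs -> sol_P00 h q c z -> False.
Hypothesis Hx0 : 0 < x0 < d1.
Hypothesis Hzx : - k * x0 < zs x0.

Let Hx01 : 0 < x0 < 1.
Proof. lra. Qed.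

Lemma trap_back c s a : c <= cs -> s <= zs x0 -> 0 < a <= x0 -> exists e, tsol_below c e x0 s a x0.
Proof.
  intros Hc Hs Ha.
  destruct (neg_bounded_away zs a x0 ltac:(lra) (fun t Ht => solves_cont _ _ _ _ t Hzs ltac:(lra))
    (fun t Ht => proj1 (Hzs t ltac:(lra)))) as [be [Hbe Hzb]].
  set (e := be / 2). assert (He : 0 < e) by (unfold e; lra).
  destruct (tsol_spec c e x0 s He ltac:(lra)) as [S [Cy _]].
  assert (Hle : forall t, a <= t <= x0 -> tsol c e x0 s t <= zs t).
  { intros t1 Ht1. apply Rnot_lt_le. intro Hn.
    assert (Ht1x : t1 < x0) by (destruct (Rle_lt_or_eq_dec t1 x0 (proj2 Ht1)) as [E|E]; [exact E| subst t1; lra]).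
    destruct (first_zero (fun t => tsol c e x0 s t - zs t) t1 x0 Ht1x) as [T [HT1 [HT2 HT3]]];
      [intros t Ht; apply (continuous_minus (tsol c e x0 s) zs t); [apply Cy| apply (solves_cont cs zs 0 1); [exact Hzs| lra]]| lra| lra|].
    cbv beta in HT2, HT3.
    destruct (tsol_true_near c e x0 s T He ltac:(lra) ltac:(lra) ltac:(specialize (Hzb T ltac:(lra)); assert (2 * e = be) by (unfold e; lra); lra))
      as [d [Hd [HdT [HTd Hy]]]].
    apply (no_first_touch cs c zs (tsol c e x0 s) t1 T d Hc ltac:(lra) ltac:(lra) HTd); [| exact Hy| |lra].
    - apply (solves_sub cs zs 0 1); [exact Hzs| lra| lra].
    - intros t Ht. specialize (HT3 t Ht). lra. }
  exists e. split; [exact He|]. intros t Ht. specialize (Hle t Ht). specialize (Hzb t Ht). unfold e in *. lra.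
Qed.

Lemma trap_fwd s b : s < zs x0 -> x0 <= b < 1 -> exists e, tsol_below cs e x0 s x0 b.
Proof.
  intros Hs Hb.
  destruct (neg_bounded_away zs x0 b ltac:(lra) (fun t Ht => solves_cont _ _ _ _ t Hzs ltac:(lra))
    (fun t Ht => proj1 (Hzs t ltac:(lra)))) as [be [Hbe Hzb]].
  set (e := be / 2). assert (He : 0 < e) by (unfold e; lra).
  destruct (tsol_spec cs e x0 s He ltac:(lra)) as [S [Cy _]].
  assert (Hle : forall t, x0 <= t <= b -> tsol cs e x0 s t <= zs t).
  { intros t1 Ht1. apply Rnot_lt_le. intro Hn.
    assert (Ht1x : x0 < t1) by (destruct (Rle_lt_or_eq_dec x0 t1 (proj1 Ht1)) as [E|E]; [exact E| subst t1; lra]).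
    destruct (first_zero (fun t => zs t - tsol cs e x0 s t) x0 t1 Ht1x) as [T [HT1 [HT2 HT3]]];
      [intros t Ht; apply (continuous_minus zs (tsol cs e x0 s) t); [apply (solves_cont cs zs 0 1); [exact Hzs| lra]| apply Cy]| lra| lra|].
    cbv beta in HT2, HT3.
    destruct (tsol_true_near cs e x0 s T He ltac:(lra) ltac:(lra) ltac:(specialize (Hzb T ltac:(lra)); assert (2 * e = be) by (unfold e; lra); lra))
      as [d [Hd [HdT [HTd Hy]]]].
    apply (no_first_touch cs cs (tsol cs e x0 s) zs x0 T d ltac:(lra) ltac:(lra) ltac:(lra) HTd); [exact Hy| | |lra].
    - apply (solves_sub cs zs 0 1); [exact Hzs| lra| lra].
    - intros t Ht. specialize (HT3 t Ht). lra. }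
  exists e. split; [exact He|]. intros t Ht. specialize (Hle t Ht). specialize (Hzb t Ht). unfold e in *. lra.
Qed.

Lemma stays_negative_at_cs : stays_negative x0 cs (- k * x0).
Proof.
  destruct (glue cs x0 (- k * x0) Hx01) as [Y [HYx HY]].
  { intros a b Ha Hax Hxb Hb.
    destruct (trap_back cs (- k * x0) a ltac:(lra) ltac:(lra) ltac:(lra)) as [ea Ba].
    destruct (trap_fwd (- k * x0) b ltac:(lra) ltac:(lra)) as [eb Bb].
    exists (Rmin ea eb). apply tsol_below_combine; auto; lra. }
  set (D0 := zs x0 + k * x0). assert (HD0 : 0 < D0) by (unfold D0; lra).
  apply (stays_negative_of_solution x0 Hx01 cs _ Y D0 HD0 HY HYx).
  intros t Ht.
  assert (Hz' : solves cs zs (x0 / 2) ((t + 1) / 2)) by (apply (solves_sub cs zs 0 1); [exact Hzs| lra| lra]).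
  assert (HY' : solves cs Y (x0 / 2) ((t + 1) / 2)) by (apply (solves_sub cs Y 0 1); [exact HY| lra| lra]).
  assert (E := difference_formula cs zs Y (x0 / 2) ((t + 1) / 2) x0 t ltac:(lra) ltac:(lra) ltac:(lra) ltac:(lra)
    Hz' HY' t ltac:(lra)).
  assert (Hi : 0 <= RInt (fun u => q u / (zs u * Y u)) x0 t).
  { apply RInt_ge_0; [lra| |].
    - apply (coefficient_integrable cs zs Y (x0 / 2) ((t + 1) / 2)); try lra; assumption.
    - intros u Hu. apply coefficient_nonneg; [lra| apply Hzs; lra| apply HY; lra]. }
  assert (He := exp_ge1 _ Hi). rewrite HYx in E. replace (zs x0 - - k * x0) with D0 in E by (unfold D0; ring).
  assert (D0 <= D0 * exp (RInt (fun u => q u / (zs u * Y u)) x0 t)) by nra.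
  assert (Hz := proj1 (Hzs t ltac:(lra))). lra.
Qed.

Lemma stays_negative_below_cs : exists cp, cs - e1 <= cp < cs /\ stays_negative x0 cp (- k * x0).
Proof.
  destruct (stays_negative_open x0 Hx01 cs _ stays_negative_at_cs) as [r [Hr Hg]].
  exists (cs - Rmin e1 r / 2).
  assert (0 < Rmin e1 r) by (apply Rmin_glb_lt; lra).
  assert (Rmin e1 r <= e1) by apply Rmin_l. assert (Rmin e1 r <= r) by apply Rmin_r.
  split; [lra|]. apply Hg; [rewrite Rabs_left by lra; lra| rewrite Rminus_diag, Rabs_R0; lra].
Qed.

(* For c <= cs, the solution from (x0, zs x0) lies above zs, hence reaches 0 at 1. *)
Lemma not_stays_negative_from_zs c : c <= cs -> ~ stays_negative x0 c (zs x0).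
Proof.
  intros Hc [eta [He Hg]].
  destruct (tsol_spec c eta x0 (zs x0) He ltac:(lra)) as [S [Cy _]].
  destruct (margin _ x0 1 eta Cy ltac:(lra) He Hg) as [dl [Hdl Hy]].
  set (al := Rmax (x0 - dl) (x0 / 2)).
  assert (Hal : x0 - dl <= al /\ x0 / 2 <= al /\ al < x0)
    by (unfold al; split; [apply Rmax_l| split; [apply Rmax_r| apply Rmax_lub_lt; lra]]).
  assert (Hsol : solves c (tsol c eta x0 (zs x0)) al 1).
  { apply tsol_solves; try lra. intros u Hu. specialize (Hy u ltac:(lra)). lra. }
  assert (Hle : forall t, x0 < t < 1 -> zs t <= tsol c eta x0 (zs x0) t).
  { intros t Ht.
    apply (compare_fwd c (tsol c eta x0 (zs x0)) zs (fun _ => cs - c) al ((t + 1) / 2) x0 t); try lra.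
    - apply sol_pair_of_solves; [apply (solves_sub c _ al 1)| apply (solves_sub cs zs 0 1)]; auto; lra.
    - intros; lra. }
  assert (H := ineq_at_1 (tsol c eta x0 (zs x0)) zs x0 ltac:(lra) (continuous_within01 _ 1 (Cy 1)) (Hzc 1 ltac:(unfold in01; lra)) Hle).
  specialize (Hg 1 ltac:(lra)). lra.
Qed.

Lemma shooting_sup cp : stays_negative x0 cp (- k * x0) -> cp <= cs -> exists sh,
  - k * x0 <= sh <= zs x0 /\ ~ stays_negative x0 cp sh /\
  (forall r, 0 < r -> exists s, stays_negative x0 cp s /\ sh - r < s <= sh).
Proof.
  intros Hg0 Hcp.
  set (S := fun s => - k * x0 <= s <= zs x0 /\ stays_negative x0 cp s).
  destruct (completeness S) as [sh [Hub Hlub]].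
  { exists (zs x0); intros x [Hx _]; lra. }
  { exists (- k * x0); split; [lra| exact Hg0]. }
  assert (H1 : - k * x0 <= sh) by (apply Hub; split; [lra| exact Hg0]).
  assert (H2 : sh <= zs x0) by (apply Hlub; intros x [Hx _]; lra).
  exists sh. split; [lra|]. split.
  - intro Hg. destruct (stays_negative_open x0 Hx01 cp sh Hg) as [r [Hr Hp]].
    destruct (Rle_or_lt (zs x0) (sh + r / 2)) as [Hz|Hz].
    + apply (not_stays_negative_from_zs cp Hcp). apply Hp; rewrite ?Rminus_diag, ?Rabs_R0, ?Rabs_right; lra.
    + assert (S (sh + r / 2)).
      { split; [lra|]. apply Hp; [rewrite Rminus_diag, Rabs_R0; lra|].
        replace (sh + r / 2 - sh) with (r / 2) by ring. rewrite Rabs_right; lra. }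
      specialize (Hub _ H). lra.
  - intros r Hr. apply NNPP. intro Hn.
    enough (sh <= sh - r) by lra.
    apply Hlub. intros x [Hx Hgx]. apply Rnot_lt_le. intro Hxr. apply Hn. exists x.
    split; [exact Hgx|]. split; [lra| apply Hub; split; auto].
Qed.

(* For c in [cs - e1, cs], solutions between the barrier and zs at x0 remain
   between them on (0, x0] (backward comparison). *)
Lemma between_barriers c Z : cs - e1 <= c <= cs -> solves c Z 0 1 -> - k * x0 <= Z x0 <= zs x0 ->
  forall t, 0 < t <= x0 -> - k * t <= Z t <= zs t.
Proof.
  intros Hc HZ HZx t Ht.
  destruct (Rle_lt_or_eq_dec t x0 (proj2 Ht)) as [Htx|Htx]; [|subst t; exact HZx].
  set (al := t / 2). set (be := (x0 + d1) / 2).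
  assert (HZ' : solves c Z al be) by (apply (solves_sub _ _ 0 1); [exact HZ| unfold al| unfold be]; lra).
  split.
  - assert (Hpair : sol_pair c Z (fun u => - k * u) (fun u => rhs c u (- k * u) + k) al be).
    { intros u Hu. destruct (HZ' u Hu) as [Z1 Z2]. split; [exact Z1|]. split; [unfold al in Hu; nra|].
      split; [exact Z2|]. replace (rhs c u (- k * u) - (rhs c u (- k * u) + k)) with (- k) by ring.
      auto_derive; auto. ring. }
    apply (compare_bwd c Z (fun u => - k * u) (fun u => rhs c u (- k * u) + k) al be t x0);
      try (unfold al, be; lra); [exact Hpair|].
    intros u Hu. apply Hup; lra.
  - apply (compare_bwd cs zs Z (fun _ => c - cs) al be t x0); try (unfold al, be; lra).
    + apply sol_pair_of_solves; [apply (solves_sub _ _ 0 1); [exact Hzs| unfold al| unfold be]; lra| exact HZ'].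
    + intros; lra.
Qed.

(* The contradiction: shooting from the supremum at cp < cs yields a solution of (P^00_cp). *)
Lemma slow_zs_contradiction : False.
Proof.
  destruct stays_negative_below_cs as [cp [Hcp Hg0]].
  destruct (shooting_sup cp Hg0 ltac:(lra)) as [sh [Hsh [Hng Happ]]].
  destruct (glue cp x0 sh Hx01) as [Z [HZx HZ]].
  { intros a b Ha Hax Hxb Hb.
    destruct (trap_back cp sh a ltac:(lra) ltac:(lra) ltac:(lra)) as [ea Ba].
    destruct (tsol_below_at_sup x0 Hx01 cp sh Happ b ltac:(lra)) as [eb Bb].
    exists (Rmin ea eb). apply tsol_below_combine; auto; lra. }
  apply (Hmin cp (ext01 Z)); [lra|].
  apply P00_of_solution; [exact HZ| |exact (vanishes_at_1 x0 Hx01 cp sh Z HZ HZx Hng)].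
  apply (vanishes_at_0_squeeze Z zs k x0 Hk ltac:(lra) Hzc Hz0).
  apply (between_barriers cp Z ltac:(lra) HZ). lra.
Qed.

End Minimality.

(** * Behaviour of q at 0 *)

Definition q_over_sq (s : R) := q s / s ^ 2.

Lemma q_over_sq_integrable a b : 0 < a -> a <= b -> b < 1 -> ex_RInt q_over_sq a b.
Proof.
  intros Ha Hab Hb. apply (ex_RInt_open _ 0 1); try lra. intros t Ht. unfold q_over_sq.
  apply (continuous_mult q); [apply cont01_interior; [apply Hq| exact Ht]|].
  apply continuous_Rinv_comp; [apply (ex_derive_continuous (fun s : R => s ^ 2)); auto_derive; auto| nra].
Qed.

Lemma q_over_sq_nonneg t : 0 < t < 1 -> 0 <= q_over_sq t.
Proof.
  intros Ht. apply Rmult_le_pos; [apply q_nonneg; unfold in01; lra| apply Rlt_le, Rinv_0_lt_compat; nra].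
Qed.

Hypothesis Hint : exists delta L, 0 < delta < 1 /\
  is_RInt_gen (fun s => q s / s ^ 2) (at_right 0) (at_point delta) L.

Lemma q_over_sq_bounded : exists rho Bd, 0 < rho < 1 /\ 0 <= Bd /\
  forall t u, 0 < t -> t <= u -> u <= rho -> RInt q_over_sq t u <= Bd.
Proof.
  destruct Hint as [delta [L [Hd HI]]].
  destruct (proj1 (filterlimi_locally _ L) HI (mkposreal 1 ltac:(lra))) as [Q R [eps Heps] HR HP].
  simpl in HR.
  set (rho := Rmin (eps / 2) (delta / 2)).
  assert (Heps0 := cond_pos eps).
  assert (Hr : 0 < rho <= eps / 2 /\ rho <= delta / 2)
    by (unfold rho; split; [split; [apply Rmin_glb_lt; lra| apply Rmin_l]| apply Rmin_r]).
  exists rho, (Rabs L + 1). split; [lra|]. split; [assert (H := Rabs_pos L); lra|].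
  intros t u Ht Htu Hu.
  destruct (HP t delta) as [z [Hz1 Hz2]];
    [apply Heps; [apply ball_R; rewrite Rminus_0_r, Rabs_right; lra| lra]| exact HR|].
  change (is_RInt q_over_sq t delta z) in Hz1.
  assert (Hzl : Rabs (z - L) < 1) by (apply ball_R; exact Hz2). apply Rabs_def2 in Hzl.
  assert (E := @RInt_Chasles R_CompleteNormedModule q_over_sq t u delta
    (q_over_sq_integrable t u ltac:(lra) ltac:(lra) ltac:(lra)) (q_over_sq_integrable u delta ltac:(lra) ltac:(lra) ltac:(lra))).
  change (plus ?a ?b) with (a + b) in E. rewrite (is_RInt_unique _ _ _ _ Hz1) in E.
  assert (0 <= RInt q_over_sq u delta).
  { apply RInt_ge_0; [lra| apply q_over_sq_integrable; lra|]. intros x Hx. apply q_over_sq_nonneg. lra. }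
  assert (L <= Rabs L) by apply Rle_abs. lra.
Qed.

Lemma RInt_inv a b : 0 < a -> a <= b -> RInt (fun s => / s) a b = ln b - ln a.
Proof.
  intros Ha Hab. apply is_RInt_unique, (@is_RInt_derive R_CompleteNormedModule ln (fun s => / s) a b);
    intros x Hx; rewrite Rmin_left, Rmax_right in Hx by lra; [apply is_derive_ln| apply continuous_Rinv]; lra.
Qed.

Hypothesis Hlim : exists l, 0 <= l /\ filterlim (fun x => q x / x) (at_right 0) (locally l).

(* A positive limit l of q(φ)/φ would make q/σ² >= (l/2)/σ near 0, which is not integrable. *)
Lemma q_ratio_limit_zero : filterlim (fun x => q x / x) (at_right 0) (locally 0).
Proof.
  destruct Hlim as [l [Hl Hql]].
  destruct Hl as [Hl|Hl]; [exfalso| subst l; exact Hql].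
  destruct q_over_sq_bounded as [rho [Bd [Hrho [HBd Hb]]]].
  destruct (proj1 (filterlim_locally _ _) Hql (mkposreal (l / 2) ltac:(lra))) as [r1 Hr1].
  assert (Hr10 := cond_pos r1).
  set (rp := Rmin rho (r1 / 2)).
  assert (Hrp : 0 < rp <= rho /\ rp <= r1 / 2)
    by (unfold rp; split; [split; [apply Rmin_glb_lt; lra| apply Rmin_l]| apply Rmin_r]).
  set (t := rp * exp (- (2 * (Bd + 1) / l))).
  assert (Hexp : exp (- (2 * (Bd + 1) / l)) < 1).
  { assert (0 < 2 * (Bd + 1) / l) by (apply Rdiv_lt_0_compat; lra).
    apply Rlt_le_trans with (exp 0); [apply exp_increasing; lra| rewrite exp_0; lra]. }
  assert (Ht : 0 < t < rp) by (unfold t; assert (H := exp_pos (- (2 * (Bd + 1) / l))); split; nra).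
  assert (Hlow : forall s, t < s < rp -> l / 2 * / s <= q_over_sq s).
  { intros s Hs. assert (Hb1 : Rabs (q s / s - l) < l / 2).
    { apply ball_R, Hr1; [apply ball_R; rewrite Rminus_0_r, Rabs_right|]; lra. }
    apply Rabs_def2 in Hb1. unfold q_over_sq.
    replace (q s / s ^ 2) with ((q s / s) * / s) by (field; lra).
    apply Rmult_le_compat_r; [apply Rlt_le, Rinv_0_lt_compat; lra| lra]. }
  assert (Hinv : ex_RInt (fun s => / s) t rp).
  { apply (@ex_RInt_continuous R_CompleteNormedModule). intros z Hz.
    rewrite Rmin_left, Rmax_right in Hz by lra. apply continuous_Rinv. lra. }
  assert (Hle : RInt (fun s => l / 2 * / s) t rp <= RInt q_over_sq t rp).
  { apply RInt_le; [lra| apply (ex_RInt_scal (V := R_NormedModule)), Hinv| apply q_over_sq_integrable; lra| exact Hlow]. }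
  assert (E : RInt (fun s => l / 2 * / s) t rp = l / 2 * (ln rp - ln t)).
  { rewrite <- RInt_inv by lra. apply (@RInt_scal R_CompleteNormedModule (fun s => / s) t rp (l / 2) Hinv). }
  assert (Eln : ln rp - ln t = 2 * (Bd + 1) / l) by (unfold t; rewrite ln_mult, ln_exp by (try apply exp_pos; lra); ring).
  rewrite E, Eln in Hle. replace (l / 2 * (2 * (Bd + 1) / l)) with (Bd + 1) in Hle by (field; lra).
  specialize (Hb t rp ltac:(lra) ltac:(lra) ltac:(lra)). lra.
Qed.

(** * Step 1: the barrier -kφ *)

Lemma linear_barrier cs : cs > h 0 -> exists d1, 0 < d1 < 1 /\ forall c t, cs - (cs - h 0) / 4 <= c <= cs ->
  0 < t < d1 -> rhs c t (- ((cs - h 0) / 4) * t) + (cs - h 0) / 4 <= 0.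
Proof.
  intros Hgt. set (a0 := cs - h 0). set (k := a0 / 4).
  assert (Ha0 : 0 < a0) by (unfold a0; lra). assert (Hk : 0 < k) by (unfold k; lra).
  destruct (proj1 (filterlim_locally _ _) q_ratio_limit_zero (mkposreal (k * a0 / 8) ltac:(nra))) as [rq Hrq].
  destruct (cont01_ed h 0 (a0 / 4) Hh ltac:(unfold in01; lra) ltac:(lra)) as [dh [Hdh Hhd]].
  assert (Hrq0 := cond_pos rq).
  set (d1 := Rmin (1 / 2) (Rmin rq dh)).
  assert (Hd1 : 0 < d1 <= 1 / 2 /\ d1 <= rq /\ d1 <= dh).
  { unfold d1. repeat split; [repeat apply Rmin_glb_lt; lra| apply Rmin_l| |].
    - eapply Rle_trans; [apply Rmin_r| apply Rmin_l].
    - eapply Rle_trans; [apply Rmin_r| apply Rmin_r]. }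
  exists d1. split; [lra|]. intros c t Hc Ht. unfold rhs.
  replace (q t / (- k * t)) with (- ((q t / t) / k)) by (field; lra).
  assert (Hqt : Rabs (q t / t - 0) < k * a0 / 8) by (apply ball_R, Hrq; [apply ball_R; rewrite Rminus_0_r, Rabs_right|]; lra).
  rewrite Rminus_0_r in Hqt. apply Rabs_def2 in Hqt.
  assert (H2 := Hhd t ltac:(unfold in01; lra) ltac:(rewrite Rminus_0_r, Rabs_right; lra)).
  apply Rabs_def2 in H2.
  assert (H3 : (q t / t) / k < a0 / 8).
  { apply Rmult_lt_reg_r with k; [exact Hk|]. replace (q t / t / k * k) with (q t / t) by (field; lra). lra. }
  unfold k, a0 in *. lra.
Qed.

(** * Step 2: z* lies below the barrier near 0 *)

Lemma minimal_solution_fast zs cs k d1 e1 : solves cs zs 0 1 -> cont01 zs -> zs 0 = 0 -> zs 1 = 0 ->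
  0 < k -> 0 < d1 < 1 -> 0 < e1 ->
  (forall c t, cs - e1 <= c <= cs -> 0 < t < d1 -> rhs c t (- k * t) + k <= 0) ->
  (forall c z, c < cs -> sol_P00 h q c z -> False) ->
  exists d0, 0 < d0 /\ forall s, 0 < s < d0 -> zs s <= - k * s.
Proof.
  intros Hzs Hzc Hz0 Hz1 Hk Hd1 He1 Hup Hmin. apply NNPP. intro Hn.
  assert (Hx : exists x0, 0 < x0 < d1 /\ - k * x0 < zs x0).
  { apply NNPP. intro Hn2. apply Hn. exists d1. split; [lra|]. intros s Hs.
    apply Rnot_lt_le. intro Hl. apply Hn2. exists s. auto. }
  destruct Hx as [x0 [Hx0 Hzx]].
  exact (slow_zs_contradiction zs cs k d1 e1 x0 Hzs Hzc Hz0 Hz1 Hk Hd1 He1 Hup Hmin Hx0 Hzx).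
Qed.

(** * Step 3: uniqueness *)

Section Uniqueness.
Variables (zs w : R -> R) (cs k d0 : R).
Hypothesis Hzs : solves cs zs 0 1.
Hypothesis Hzc : cont01 zs.
Hypothesis Hz0 : zs 0 = 0.
Hypothesis Hz1 : zs 1 = 0.
Hypothesis Hws : solves cs w 0 1.
Hypothesis Hwc : cont01 w.
Hypothesis Hw0 : w 0 = 0.
Hypothesis Hk : 0 < k.
Hypothesis Hd0 : 0 < d0.
Hypothesis Hfast : forall s, 0 < s < d0 -> zs s <= - k * s.

Lemma difference_on_subinterval a b : 0 < a -> a <= b -> b < 1 ->
  zs b - w b = (zs a - w a) * exp (RInt (fun u => q u / (zs u * w u)) a b).
Proof.
  intros Ha Hab Hb.
  apply (difference_formula cs zs w (a / 2) ((b + 1) / 2) a b); try lra;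
    apply (solves_sub cs _ 0 1); auto; lra.
Qed.

Lemma coefficient_integral_nonneg a b : 0 < a -> a <= b -> b < 1 ->
  0 <= RInt (fun u => q u / (zs u * w u)) a b.
Proof.
  intros Ha Hab Hb. apply RInt_ge_0; [lra| |].
  - apply (coefficient_integrable cs zs w (a / 2) ((b + 1) / 2)); try lra; apply (solves_sub cs _ 0 1); auto; lra.
  - intros u Hu. apply coefficient_nonneg; [lra| apply Hzs; lra| apply Hws; lra].
Qed.

(* Above zs, w would stay at a fixed distance from zs up to 1, where zs vanishes. *)
Lemma not_above x1 : 0 < x1 < 1 -> w x1 <= zs x1.
Proof.
  intros Hx1. apply Rnot_lt_le. intro Hgt. set (m := w x1 - zs x1).
  assert (Habove : forall t, x1 <= t < 1 -> zs t + m <= w t).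
  { intros t Ht. assert (E := difference_on_subinterval x1 t ltac:(lra) ltac:(lra) ltac:(lra)).
    assert (He := exp_ge1 _ (coefficient_integral_nonneg x1 t ltac:(lra) ltac:(lra) ltac:(lra))).
    replace (zs x1 - w x1) with (- m) in E by (unfold m; ring).
    assert (- m * exp (RInt (fun u => q u / (zs u * w u)) x1 t) <= - m) by (unfold m in *; nra). lra. }
  destruct (cont01_ed zs 1 (m / 2) Hzc ltac:(unfold in01; lra) ltac:(unfold m; lra)) as [da [Hda Hza]].
  set (t := Rmax x1 (1 - da / 2)).
  assert (Ht : x1 <= t < 1 /\ 1 - da / 2 <= t) by (unfold t; split; [split; [apply Rmax_l| apply Rmax_lub_lt; lra]| apply Rmax_r]).
  specialize (Hza t ltac:(unfold in01; lra) ltac:(rewrite Rabs_left; lra)).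
  rewrite Hz1, Rminus_0_r in Hza. apply Rabs_def2 in Hza.
  specialize (Habove t ltac:(lra)). destruct (Hws t ltac:(lra)) as [Hwt _]. lra.
Qed.

Variables (rho Bd : R).
Hypothesis Hrho : 0 < rho.
Hypothesis Hbd : forall t u, 0 < t -> t <= u -> u <= rho -> RInt q_over_sq t u <= Bd.

(* Below zs <= -k s, the coefficient q/(zs w) is at most q/(k s)², whose
   integrals near 0 are bounded. *)
Lemma coefficient_integral_bound t t1 : 0 < t <= t1 -> t1 <= d0 / 2 -> t1 <= rho -> t1 < 1 ->
  (forall s, 0 < s <= t1 -> w s < zs s) -> RInt (fun u => q u / (zs u * w u)) t t1 <= Bd / k ^ 2.
Proof.
  intros Ht Ht1d Ht1r Ht1 Hbelow.
  apply Rle_trans with (RInt (fun s => / k ^ 2 * q_over_sq s) t t1).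
  - apply RInt_le; [lra| apply (coefficient_integrable cs zs w (t / 2) ((t1 + 1) / 2)); try lra;
      apply (solves_sub cs _ 0 1); auto; lra|
      apply (ex_RInt_scal (V := R_NormedModule)), q_over_sq_integrable; lra|].
    intros s Hs. unfold q_over_sq.
    assert (Hzk := Hfast s ltac:(lra)). assert (Hd := Hbelow s ltac:(lra)).
    assert (Hq0 : 0 <= q s) by (apply q_nonneg; unfold in01; lra).
    assert (Hprod : k ^ 2 * s ^ 2 <= zs s * w s).
    { replace (k ^ 2 * s ^ 2) with ((k * s) * (k * s)) by ring.
      replace (zs s * w s) with ((- zs s) * (- w s)) by ring.
      apply Rmult_le_compat; nra. }
    assert (0 < k ^ 2 * s ^ 2) by (apply Rmult_lt_0_compat; nra).
    replace (/ k ^ 2 * (q s / s ^ 2)) with (q s / (k ^ 2 * s ^ 2)) by (field; lra).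
    unfold Rdiv. apply Rmult_le_compat_l; [exact Hq0| apply Rinv_le_contravar; lra].
  - assert (Es : RInt (fun s => / k ^ 2 * q_over_sq s) t t1 = / k ^ 2 * RInt q_over_sq t t1)
      by (apply (@RInt_scal R_CompleteNormedModule q_over_sq t t1 (/ k ^ 2)); apply q_over_sq_integrable; lra).
    rewrite Es. specialize (Hbd t t1 ltac:(lra) ltac:(lra) ltac:(lra)).
    unfold Rdiv. rewrite Rmult_comm. apply Rmult_le_compat_r; [apply Rlt_le, Rinv_0_lt_compat; nra| exact Hbd].
Qed.

Lemma gap_small_near_0 m t1 : 0 < m -> 0 < t1 < 1 -> exists t, 0 < t <= t1 /\ zs t - w t < m.
Proof.
  intros Hm Ht1.
  destruct (cont01_ed zs 0 (m / 2) Hzc ltac:(unfold in01; lra) ltac:(lra)) as [da [Hda Hza]].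
  destruct (cont01_ed w 0 (m / 2) Hwc ltac:(unfold in01; lra) ltac:(lra)) as [db [Hdb Hwb]].
  set (t := Rmin t1 (Rmin da db) / 2).
  assert (Ht : 0 < t <= t1 / 2 /\ t <= da / 2 /\ t <= db / 2).
  { unfold t. assert (Rmin t1 (Rmin da db) <= t1) by apply Rmin_l.
    assert (Rmin t1 (Rmin da db) <= da) by (eapply Rle_trans; [apply Rmin_r| apply Rmin_l]).
    assert (Rmin t1 (Rmin da db) <= db) by (eapply Rle_trans; [apply Rmin_r| apply Rmin_r]).
    assert (0 < Rmin t1 (Rmin da db)) by (repeat apply Rmin_glb_lt; lra). lra. }
  specialize (Hza t ltac:(unfold in01; lra) ltac:(rewrite Rminus_0_r, Rabs_right; lra)).
  specialize (Hwb t ltac:(unfold in01; lra) ltac:(rewrite Rminus_0_r, Rabs_right; lra)).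
  rewrite Hz0, Rminus_0_r in Hza. rewrite Hw0, Rminus_0_r in Hwb.
  apply Rabs_def2 in Hza, Hwb. exists t. split; lra.
Qed.

(* Below zs, w would keep a positive distance m0 from zs near 0 (the exponential
   factor is bounded by integrability), contradicting gap_small_near_0. *)
Lemma not_below x1 : 0 < x1 < 1 -> zs x1 <= w x1.
Proof.
  intros Hx1. apply Rnot_lt_le. intro Hlt.
  assert (Hpos : forall t, 0 < t <= x1 -> 0 < zs t - w t).
  { intros t Ht. assert (E := difference_on_subinterval t x1 ltac:(lra) ltac:(lra) ltac:(lra)).
    assert (H := exp_pos (RInt (fun u => q u / (zs u * w u)) t x1)). nra. }
  set (t1 := Rmin x1 (Rmin (d0 / 2) rho)).
  assert (Ht1 : 0 < t1 <= x1 /\ t1 <= d0 / 2 /\ t1 <= rho).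
  { unfold t1. repeat split; [repeat apply Rmin_glb_lt; lra| apply Rmin_l| |].
    - eapply Rle_trans; [apply Rmin_r| apply Rmin_l].
    - eapply Rle_trans; [apply Rmin_r| apply Rmin_r]. }
  set (m0 := (zs t1 - w t1) * exp (- (Bd / k ^ 2))).
  assert (Hm0 : 0 < m0) by (unfold m0; apply Rmult_lt_0_compat; [apply Hpos; lra| apply exp_pos]).
  destruct (gap_small_near_0 m0 t1 Hm0 ltac:(lra)) as [t [Ht Hgap]].
  assert (E := difference_on_subinterval t t1 ltac:(lra) ltac:(lra) ltac:(lra)).
  assert (Hb := coefficient_integral_bound t t1 Ht ltac:(lra) ltac:(lra) ltac:(lra)
    ltac:(intros s Hs; specialize (Hpos s ltac:(lra)); lra)).
  enough (m0 <= zs t - w t) by lra.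
  replace (zs t - w t) with ((zs t1 - w t1) * exp (- RInt (fun u => q u / (zs u * w u)) t t1))
    by (rewrite E, Rmult_assoc, <- exp_plus, Rplus_opp_r, exp_0; ring).
  unfold m0. apply Rmult_le_compat_l; [assert (H := Hpos t1 ltac:(lra)); lra| apply exp_le; lra].
Qed.

Lemma fast_solution_unique x : in01 x -> w x = zs x.
Proof.
  intros Hx. destruct Hx as [[Hx0|Hx0] [Hx1|Hx1]]; try lra.
  - apply Rle_antisym; [apply not_above| apply not_below]; lra.
  - subst x. assert (Hin : forall t, 1 / 2 < t < 1 -> w t = zs t)
      by (intros t Ht; apply Rle_antisym; [apply not_above| apply not_below]; lra).
    apply Rle_antisym; apply (ineq_at_1 _ _ (1 / 2)); try lra; try (apply Hwc || apply Hzc; unfold in01; lra);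
      intros t Ht; rewrite Hin by lra; lra.
  - subst x. rewrite Hw0, Hz0. reflexivity.
Qed.

End Uniqueness.

End Equation.

Theorem proposition6p2 (f h q : R -> R) (cstar : R)
  (Hf : C1_01_with_deriv f h) (Hf0 : f 0 = 0)
  (Hq : cond_q q)
  (Hlim : exists l, 0 <= l /\
            filterlim (fun x => q x / x) (at_right 0) (locally l))
  (Hint : exists delta L, 0 < delta < 1 /\
            is_RInt_gen (fun s => q s / s ^ 2) (at_right 0) (at_point delta) L)
  (Hcstar : forall c, (exists z, sol_P00 h q c z) <-> cstar <= c)
  (Hgt : cstar > h 0) :
  exists z, sol_P h q cstar z /\ z 1 = 0 /\
    (forall w, sol_P h q cstar w -> forall x, in01 x -> w x = z x).
Proof.
  destruct Hf as [_ [Hh _]].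
  destruct (proj2 (Hcstar cstar) (Rle_refl _)) as [zs [[Hzc [Hzd [Hzn Hz0]]] Hz1]].
  assert (Hzs : solves h q cstar zs 0 1) by (intros t Ht; split; [apply Hzn| apply Hzd]; exact Ht).
  set (k := (cstar - h 0) / 4). assert (Hk : 0 < k) by (unfold k; lra).
  destruct (linear_barrier h q Hh Hq Hint Hlim cstar Hgt) as [d1 [Hd1 Hup]].
  destruct (minimal_solution_fast h q Hh Hq zs cstar k d1 k Hzs Hzc Hz0 Hz1 Hk Hd1 Hk Hup) as [d0 [Hd0 Hfast]].
  { intros c z Hc Hz. assert (H := proj1 (Hcstar c) (ex_intro _ z Hz)). lra. }
  destruct (q_over_sq_bounded q Hq Hint) as [rho [Bd [Hrho [_ Hbd]]]].
  exists zs. split; [exact (conj Hzc (conj Hzd (conj Hzn Hz0)))| split; [exact Hz1|]].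
  intros w [Hwc [Hwd [Hwn Hw0]]] x Hx.
  assert (Hws : solves h q cstar w 0 1) by (intros t Ht; split; [apply Hwn| apply Hwd]; exact Ht).
  exact (fast_solution_unique h q Hq zs w cstar k d0 Hzs Hzc Hz0 Hz1 Hws Hwc Hw0 Hk Hd0 Hfast
    rho Bd (proj1 Hrho) Hbd x Hx).
Qed.
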